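(* Let $\alpha\ge 0$ and let $u_0,v_0,c\in\mathcal C([0,1])$ with $u_0,v_0\ge 0$ and $0<\underline c\le c(x)\le\overline c$ on $[0,1]$, where $\underline c,\overline c$ are constants. Assume either that $u_0(0)=0$ and $v_0(1)=0$ (case (DBC)), or that $u_0(0)=u_0(1)$, $v_0(0)=v_0(1)$ and $c(0)=c(1)$ (case (PBC)). Then the corresponding problem (system (S) with the (DBC), resp. (PBC), boundary conditions and initial data $u(\cdot,0)=u_0$, $v(\cdot,0)=v_0$) has a unique global mild solution $(u,v)$, and it satisfies, for all $x\in[0,1]$, $t\ge 0$, $$0\le u(x,t)\le \frac{\overline c}{\underline c}\max\Big\{\max_{[0,1]}u_0,\ \alpha\Big\},\qquad 0\le v(x,t)\le \frac{\overline c}{\underline c}\max\Big\{\max_{[0,1]}v_0,\ \alpha\Big\}.$$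
   Context: System (S): for $x\in[0,1]$, $t>0$, $$\partial_t u+\partial_x(c(x)u)=\frac{\alpha v}{1+u+v}-u,\qquad \partial_t v-\partial_x(c(x)v)=\frac{\alpha u}{1+u+v}-v.$$ Boundary conditions: (DBC) $u(0,t)=0$, $v(1,t)=0$ for $t>0$; (PBC) $u(0,t)=u(1,t)$, $v(0,t)=v(1,t)$ for $t>0$ (with $c$ periodic). Mild solutions: define $\frac1C=\int_0^1\frac{dx}{c(x)}$, the change of variable $X(x)=C\int_0^x\frac{d\xi}{c(\xi)}\in[0,1]$ (a homeomorphism of $[0,1]$), $\beta(X)=C/c(x)$ where $X=X(x)$, and $U_0(X)=c(x)u_0(x)/C$, $V_0(X)=c(x)v_0(x)/C$. For functions $U,V$ set $R_{U,V}(X,t)=\frac{\alpha V(X,t)}{1+\beta(X)(U(X,t)+V(X,t))}$ and $R_{V,U}(X,t)=\frac{\alpha U(X,t)}{1+\beta(X)(U(X,t)+V(X,t))}$. For (PBC), $(U,V)\in\mathcal C(\mathbb T^1\times[0,\infty))^2$ (with $\mathbb T^1=[0,1]$ with endpoints identified, arguments taken mod 1) is required to satisfy $U(X,t)=U_0(X-Ct)e^{-t}+\int_0^t e^{s-t}R_{U,V}(X+C(s-t),s)\,ds$, $V(X,t)=V_0(X+Ct)e^{-t}+\int_0^t e^{s-t}R_{V,U}(X-C(s-t),s)\,ds$. For (DBC), $(U,V)\in\mathcal C([0,1]\times[0,\infty))^2$ is required to satisfy $U(X,t)=U_0(X-Ct)H(X-Ct)e^{-t}+\int_{(t-X/C)_+}^t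 e^{s-t}R_{U,V}(X+C(s-t),s)\,ds$, $V(X,t)=V_0(X+Ct)H(1-X-Ct)e^{-t}+\int_{(t-(1-X)/C)_+}^t e^{s-t}R_{V,U}(X-C(s-t),s)\,ds$, with $H$ the Heaviside function. In either case $(u(x,t),v(x,t))=\frac{C}{c(x)}(U(X(x),t),V(X(x),t))$ is called a global mild solution. *)

From Stdlib Require Import Reals Lra ClassicalEpsilon.
Open Scope R_scope.

(* Total Riemann integral: the value of RiemannInt if f is Riemann integrable
   on [a,b] (independent of the integrability proof), junk otherwise. *)
Definition RInt (f : R -> R) (a b : R) : R :=
  epsilon (inhabits 0)
    (fun I => exists pr : Riemann_integrable f a b, RiemannInt pr = I).

Definition cont01 (f : R -> R) : Prop :=
  forall x, 0 <= x <= 1 -> forall eps, 0 < eps -> exists del, 0 < del /\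
    forall y, 0 <= y <= 1 -> Rabs (y - x) < del -> Rabs (f y - f x) < eps.

Definition cont2_on (D : R -> R -> Prop) (U : R -> R -> R) : Prop :=
  forall X t, D X t -> forall eps, 0 < eps -> exists del, 0 < del /\
    forall X' t', D X' t' -> Rabs (X' - X) < del -> Rabs (t' - t) < del ->
      Rabs (U X' t' - U X t) < eps.

Definition is_max01 (f : R -> R) (M : R) : Prop :=
  (forall x, 0 <= x <= 1 -> f x <= M) /\ (exists x, 0 <= x <= 1 /\ f x = M).

Definition frac (y : R) : R := y - IZR (Int_part y).

Definition Heav (y : R) : R := if Rle_dec 0 y then 1 else 0.

Definition Cc (c : R -> R) : R := / RInt (fun x => / c x) 0 1.

Definition Xmap (c : R -> R) (x : R) : R := Cc c * RInt (fun y => / c y) 0 x.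

Definition Xinv (c : R -> R) (X : R) : R :=
  epsilon (inhabits 0) (fun x => 0 <= x <= 1 /\ Xmap c x = X).

Definition betaf (c : R -> R) (X : R) : R := Cc c / c (Xinv c X).

Definition U0f (c u0 : R -> R) (X : R) : R :=
  c (Xinv c X) * u0 (Xinv c X) / Cc c.

(* global mild solution in the (PBC) case; U, V are 1-periodic in X,
   i.e. functions on T^1 x [0,oo) *)
Definition mild_PBC (alpha : R) (c u0 v0 : R -> R) (U V : R -> R -> R) : Prop :=
  let C := Cc c in
  cont2_on (fun _ t => 0 <= t) U /\ cont2_on (fun _ t => 0 <= t) V /\
  (forall X t, 0 <= t -> U (X + 1) t = U X t /\ V (X + 1) t = V X t) /\
  (forall X t, 0 <= X <= 1 -> 0 <= t ->
     U X t = U0f c u0 (frac (X - C * t)) * exp (- t)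
       + RInt (fun s => exp (s - t) *
            (alpha * V (X + C * (s - t)) s /
              (1 + betaf c (frac (X + C * (s - t)))
                   * (U (X + C * (s - t)) s + V (X + C * (s - t)) s)))) 0 t /\
     V X t = U0f c v0 (frac (X + C * t)) * exp (- t)
       + RInt (fun s => exp (s - t) *
            (alpha * U (X - C * (s - t)) s /
              (1 + betaf c (frac (X - C * (s - t)))
                   * (U (X - C * (s - t)) s + V (X - C * (s - t)) s)))) 0 t).

Definition mild_DBC (alpha : R) (c u0 v0 : R -> R) (U V : R -> R -> R) : Prop :=
  let C := Cc c in
  cont2_on (fun X t => 0 <= X <= 1 /\ 0 <= t) U /\
  cont2_on (fun X t => 0 <= X <= 1 /\ 0 <= t) V /\
  (forall X t, 0 <= X <= 1 -> 0 <= t ->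
     U X t = U0f c u0 (X - C * t) * Heav (X - C * t) * exp (- t)
       + RInt (fun s => exp (s - t) *
            (alpha * V (X + C * (s - t)) s /
              (1 + betaf c (X + C * (s - t))
                   * (U (X + C * (s - t)) s + V (X + C * (s - t)) s))))
            (Rmax 0 (t - X / C)) t /\
     V X t = U0f c v0 (X + C * t) * Heav (1 - X - C * t) * exp (- t)
       + RInt (fun s => exp (s - t) *
            (alpha * U (X - C * (s - t)) s /
              (1 + betaf c (X - C * (s - t))
                   * (U (X - C * (s - t)) s + V (X - C * (s - t)) s))))
            (Rmax 0 (t - (1 - X) / C)) t).

Definition ufrom (c : R -> R) (U : R -> R -> R) (x t : R) : R :=
  Cc c / c x * U (Xmap c x) t.

Definition sol_bounds (alpha : R) (c u0 v0 : R -> R) (cl cu : R)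
    (U V : R -> R -> R) : Prop :=
  forall Mu Mv, is_max01 u0 Mu -> is_max01 v0 Mv ->
  forall x t, 0 <= x <= 1 -> 0 <= t ->
    0 <= ufrom c U x t <= cu / cl * Rmax Mu alpha /\
    0 <= ufrom c V x t <= cu / cl * Rmax Mv alpha.

(* After the change of variables [X = X(x)] both problems become a fixed-point
   equation [(U, V) = Phi (U, V)]: each unknown is its transported initial
   datum plus a Duhamel integral of the reaction term along the characteristics
   [X +- C t].  For nonnegative arguments the denominators of the reaction term
   are at least 1, so it lies in [[0, alpha / beta_min]] and is Lipschitz with
   constant [alpha]; hence [Phi] preserves nonnegativity and is a contraction
   for the norm weighted by [exp (- 4 alpha t)].  The Picard iterates from [0]
   converge locally uniformly to a continuous nonnegative fixed point, and the
   fixed-point equation bounds it by [max (sup U_0) (alpha / beta_min)], which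
   is the stated bound once [u = C / c(x) U].
   Another mild solution, of unknown sign, agrees with this one at [t = 0].
   While the two agree, continuity keeps the other one so close that its
   denominators stay above [1/2]; then [Phi] contracts again on a short time
   interval, so the set of times of agreement is open, closed and contains [0]. *)

From Pilot Require Import Defs.
From Stdlib Require Import Reals Lra Lia ClassicalEpsilon FunctionalExtensionality Classical.
From Coquelicot Require Import Coquelicot.
Open Scope R_scope.

Lemma exp_le_exp x y : x <= y -> exp x <= exp y.
Proof. intros [H | ->]; [left; apply exp_increasing | right]; auto. Qed.

Lemma exp_le_1 x : x <= 0 -> exp x <= 1.
Proof. intros. rewrite <- exp_0. apply exp_le_exp; lra. Qed.

Lemma exp_ge_1 x : 0 <= x -> 1 <= exp x.
Proof. intros. rewrite <- exp_0. apply exp_le_exp; lra. Qed.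

Definition clamp (a b x : R) := Rmax a (Rmin b x).

Lemma clamp_in a b x : a <= b -> a <= clamp a b x <= b.
Proof. intros; unfold clamp, Rmax, Rmin; repeat destruct Rle_dec; lra. Qed.

Lemma clamp_id a b x : a <= x <= b -> clamp a b x = x.
Proof. intros; unfold clamp, Rmax, Rmin; repeat destruct Rle_dec; lra. Qed.

Lemma clamp_lipschitz a b x y : a <= b -> Rabs (clamp a b x - clamp a b y) <= Rabs (x - y).
Proof.
  intros; unfold clamp, Rmax, Rmin; repeat destruct Rle_dec;
  unfold Rabs; repeat destruct Rcase_abs; lra.
Qed.

(** * Continuity relative to a set *)

Definition cont_within (P : R -> Prop) (f : R -> R) (x : R) : Prop :=
  forall eps, 0 < eps -> exists del, 0 < del /\
    forall y, P y -> Rabs (y - x) < del -> Rabs (f y - f x) < eps.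

Definition seq_cont_within (P : R -> Prop) (f : R -> R) (x : R) : Prop :=
  forall u : nat -> R, (forall n, P (u n)) -> is_lim_seq u x ->
    is_lim_seq (fun n => f (u n)) (f x).

Definition seq_cont2_at (D : R -> R -> Prop) (U : R -> R -> R) (X t : R) : Prop :=
  forall x s : nat -> R, (forall n, D (x n) (s n)) -> is_lim_seq x X -> is_lim_seq s t ->
    is_lim_seq (fun n => U (x n) (s n)) (U X t).

Lemma is_lim_seq_eps (u : nat -> R) (l : R) : is_lim_seq u l <->
  forall eps, 0 < eps -> exists N, forall n, (N <= n)%nat -> Rabs (u n - l) < eps.
Proof.
  rewrite <- is_lim_seq_spec. unfold is_lim_seq'. split.
  - intros H eps He. exact (H (mkposreal eps He)).
  - intros H [eps He]. exact (H eps He).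
Qed.

Lemma is_lim_seq_half_pow : is_lim_seq (fun n => (/2)^n) 0.
Proof. apply is_lim_seq_geom. rewrite Rabs_right; lra. Qed.

Lemma half_pow_le_1 n : (/2)^n <= 1.
Proof. induction n; simpl; [lra|]. assert (0 <= (/2)^n) by (apply pow_le; lra). lra. Qed.

Lemma half_pow_small (K eps : R) : 0 < eps -> exists n, K * (/2)^n < eps.
Proof.
  intros He. assert (HK : 0 < Rabs K + 1) by (pose proof (Rabs_pos K); lra).
  destruct (proj1 (is_lim_seq_eps _ _) is_lim_seq_half_pow (eps / (Rabs K + 1)))
    as [N HN]; [apply Rdiv_lt_0_compat; lra|].
  exists N. specialize (HN N (le_n N)).
  rewrite Rminus_0_r, Rabs_right in HN by (apply Rle_ge, pow_le; lra).
  assert (0 <= (/2)^N) by (apply pow_le; lra). pose proof (Rle_abs K).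
  apply Rle_lt_trans with ((Rabs K + 1) * (/2)^N); [apply Rmult_le_compat_r; lra|].
  apply Rmult_lt_reg_l with (/ (Rabs K + 1)); [apply Rinv_0_lt_compat; lra|].
  rewrite <- Rmult_assoc, Rinv_l, Rmult_1_l by lra. rewrite Rmult_comm. exact HN.
Qed.

Lemma eq0_of_half_pow_bound (x K : R) : (forall n, Rabs x <= K * (/2)^n) -> x = 0.
Proof.
  intros H. destruct (Req_dec x 0) as [|Hx]; auto.
  destruct (half_pow_small K (Rabs x)) as [n Hn]; [apply Rabs_pos_lt; auto|].
  specialize (H n). lra.
Qed.

Lemma is_lim_seq_of_half_pow_bound (a : nat -> R) (l : R) :
  (forall n, Rabs (a n - l) < (/2)^n) -> is_lim_seq a l.
Proof.
  intros H. apply is_lim_seq_eps. intros eps He.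
  destruct (proj1 (is_lim_seq_eps _ _) is_lim_seq_half_pow eps He) as [N HN].
  exists N. intros n Hn. specialize (HN n Hn). specialize (H n).
  rewrite Rminus_0_r, Rabs_right in HN by (apply Rle_ge, pow_le; lra). lra.
Qed.

(* The converse directions pick a counterexample at every scale [(/2)^n]
   by countable choice. *)
Lemma cont_within_seq P f x : cont_within P f x <-> seq_cont_within P f x.
Proof.
  split.
  - intros H u HP Hu. apply is_lim_seq_eps. intros eps He.
    destruct (H eps He) as [d [Hd Hd']].
    destruct (proj1 (is_lim_seq_eps _ _) Hu d Hd) as [N HN].
    exists N. intros n Hn. apply Hd'; auto.
  - intros H eps He. apply NNPP. intro Hn.
    assert (Hall : forall n : nat, exists y, P y /\ Rabs (y - x) < (/2)^n /\
        eps <= Rabs (f y - f x)).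
    { intro n. apply NNPP. intro Hn2. apply Hn. exists ((/2)^n).
      split; [apply pow_lt; lra|].
      intros y HP H1. apply Rnot_le_lt. intro. apply Hn2. exists y. auto. }
    destruct (choice _ Hall) as [p Hp].
    assert (Hl : is_lim_seq (fun n => f (p n)) (f x)).
    { apply H; [intro n; apply Hp|]. apply is_lim_seq_of_half_pow_bound; intro n; apply Hp. }
    destruct (proj1 (is_lim_seq_eps _ _) Hl eps He) as [N HN].
    specialize (HN N (le_n N)). destruct (Hp N) as [_ [_ HH]]. lra.
Qed.

Lemma cont2_on_seq D U : cont2_on D U <-> forall X t, D X t -> seq_cont2_at D U X t.
Proof.
  split.
  - intros H X t HD x s HDn Hx Hs. apply is_lim_seq_eps. intros eps He.
    destruct (H X t HD eps He) as [d [Hd Hd']].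
    destruct (proj1 (is_lim_seq_eps _ _) Hx d Hd) as [N1 HN1].
    destruct (proj1 (is_lim_seq_eps _ _) Hs d Hd) as [N2 HN2].
    exists (max N1 N2). intros n Hn. apply Hd'; auto; [apply HN1 | apply HN2]; lia.
  - intros H X t HD eps He. apply NNPP. intro Hn.
    assert (Hall : forall n : nat, exists p : R * R, D (fst p) (snd p) /\
        Rabs (fst p - X) < (/2)^n /\ Rabs (snd p - t) < (/2)^n /\
        eps <= Rabs (U (fst p) (snd p) - U X t)).
    { intro n. apply NNPP. intro Hn2. apply Hn. exists ((/2)^n).
      split; [apply pow_lt; lra|].
      intros X' t' HD' H1 H2. apply Rnot_le_lt. intro. apply Hn2. exists (X', t'). auto. }
    destruct (choice _ Hall) as [p Hp].
    assert (Hl : is_lim_seq (fun n => U (fst (p n)) (snd (p n))) (U X t)).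
    { apply (H X t HD); [intro n; apply Hp | |];
        apply is_lim_seq_of_half_pow_bound; intro n; apply Hp. }
    destruct (proj1 (is_lim_seq_eps _ _) Hl eps He) as [N HN].
    specialize (HN N (le_n N)). destruct (Hp N) as [_ [_ [_ HH]]]. lra.
Qed.

Lemma cont2_on_ext D f g :
  cont2_on D f -> (forall X t, D X t -> g X t = f X t) -> cont2_on D g.
Proof.
  intros H Heq X t HD eps He. destruct (H X t HD eps He) as [d [Hd Hd']].
  exists d; split; auto. intros X' t' HD' H1 H2. rewrite !Heq; auto.
Qed.

Lemma cont2_on_subset (D1 D2 : R -> R -> Prop) U :
  (forall X t, D2 X t -> D1 X t) -> cont2_on D1 U -> cont2_on D2 U.
Proof.
  intros Hs H X t HD eps He. destruct (H X t (Hs X t HD) eps He) as [d [Hd Hd']].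
  exists d; split; auto.
Qed.

Lemma cont2_on_plus D f g :
  cont2_on D f -> cont2_on D g -> cont2_on D (fun X t => f X t + g X t).
Proof.
  rewrite !cont2_on_seq. intros Hf Hg X t HD x s Hn Hx Hs.
  apply is_lim_seq_plus'; [apply Hf | apply Hg]; auto.
Qed.

Lemma cont2_on_minus D f g :
  cont2_on D f -> cont2_on D g -> cont2_on D (fun X t => f X t - g X t).
Proof.
  rewrite !cont2_on_seq. intros Hf Hg X t HD x s Hn Hx Hs.
  apply is_lim_seq_minus'; [apply Hf | apply Hg]; auto.
Qed.

Lemma cont2_on_abs D f : cont2_on D f -> cont2_on D (fun X t => Rabs (f X t)).
Proof.
  intros Hf X t HD eps He. destruct (Hf X t HD eps He) as [d [Hd Hd']].
  exists d; split; auto. intros. eapply Rle_lt_trans; [apply Rabs_triang_inv2 | auto].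
Qed.

Lemma cont2_on_const D k : cont2_on D (fun _ _ => k).
Proof.
  intros X t _ eps He. exists 1. split; [lra|]. intros. rewrite Rminus_diag, Rabs_R0. auto.
Qed.

Lemma cont2_on_affine D (a b e : R) : cont2_on D (fun X t => a * t + b * X + e).
Proof.
  apply cont2_on_seq. intros X t HD x s Hn Hx Hs.
  apply is_lim_seq_plus'; [apply is_lim_seq_plus'|apply is_lim_seq_const];
    now apply is_lim_seq_scal_l with (lu := Finite _).
Qed.

Lemma cont2_on_Rmax0 D f : cont2_on D f -> cont2_on D (fun X t => Rmax 0 (f X t)).
Proof.
  intros Hf X t HD eps He. destruct (Hf X t HD eps He) as [d [Hd Hd']].
  exists d; split; auto. intros X' t' HD' H1 H2. eapply Rle_lt_trans; [|apply (Hd' X' t'); auto].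
  unfold Rmax. repeat destruct Rle_dec; unfold Rabs; repeat destruct Rcase_abs; lra.
Qed.

Lemma local_to_uniform (a b : R) (Q : R -> R -> Prop) :
  a <= b ->
  (forall x d d', Q x d -> 0 < d' <= d -> Q x d') ->
  (forall x, a <= x <= b -> exists d, 0 < d /\
     forall y, a <= y <= b -> Rabs (y - x) < d -> Q y d) ->
  exists d, 0 < d /\ forall y, a <= y <= b -> Q y d.
Proof.
  intros Hab Hmon Hloc.
  set (E := fun s => a <= s <= b /\ exists d, 0 < d /\ forall y, a <= y <= s -> Q y d).
  assert (Ea : E a).
  { destruct (Hloc a (conj (Rle_refl a) Hab)) as [d [Hd Hd']].
    split; [lra|]. exists d; split; auto. intros y Hy. replace y with a by lra.
    apply Hd'; [lra|]. rewrite Rminus_diag, Rabs_R0; lra. }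
  destruct (completeness E) as [s [Hub Hlub]].
  { exists b. intros s [Hs _]. lra. }
  { exists a. exact Ea. }
  assert (Has : a <= s) by (apply Hub; auto).
  assert (Hsb : s <= b) by (apply Hlub; intros s' [Hs' _]; lra).
  destruct (Hloc s (conj Has Hsb)) as [ds [Hds Hds']].
  assert (Hex : exists s1, E s1 /\ s - ds < s1).
  { apply NNPP; intro Hn.
    assert (s <= s - ds); [|lra].
    apply Hlub. intros s1 Hs1. apply Rnot_lt_le. intro. apply Hn; eauto. }
  destruct Hex as [s1 [[Hs1 [d1 [Hd1 Hd1']]] Hlt]].
  set (s2 := Rmin b (s + ds/2)).
  assert (E2 : E s2).
  { split; [unfold s2, Rmin; destruct Rle_dec; lra|].
    exists (Rmin d1 ds). split; [apply Rmin_pos; auto|].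
    intros y Hy. destruct (Rle_dec y s1).
    - apply Hmon with d1; [apply Hd1'; lra|]. split; [apply Rmin_pos; auto | apply Rmin_l].
    - apply Hmon with ds; [apply Hds'|].
      + unfold s2, Rmin in Hy; destruct Rle_dec in Hy; lra.
      + unfold s2, Rmin in Hy; destruct Rle_dec in Hy; unfold Rabs; destruct Rcase_abs; lra.
      + split; [apply Rmin_pos; auto | apply Rmin_r]. }
  assert (s2 <= s) by (apply Hub; auto).
  assert (s2 = b) by (unfold s2 in *; unfold Rmin in *; destruct Rle_dec; lra).
  destruct E2 as [_ [d [Hd Hd']]]. exists d; split; auto. intros y Hy. apply Hd'. lra.
Qed.

Lemma real_induction (A : R -> Prop) :
  A 0 ->
  (forall tau tau', A tau -> 0 <= tau' <= tau -> A tau') ->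
  (forall tau, 0 < tau -> (forall s, 0 <= s < tau -> A s) -> A tau) ->
  (forall tau, 0 <= tau -> A tau -> exists d, 0 < d /\ A (tau + d)) ->
  forall T, 0 <= T -> A T.
Proof.
  intros A0 Hdown Hclosed Hstep T HT. apply NNPP. intro HnA.
  set (E := fun tau => 0 <= tau /\ A tau).
  destruct (completeness E) as [ts [Hub Hlub]].
  { exists T. intros tau [Ht HA]. apply Rnot_lt_le. intro. apply HnA.
    apply Hdown with tau; auto; lra. }
  { exists 0. split; [lra | exact A0]. }
  assert (Hts0 : 0 <= ts) by (apply Hub; split; [lra | exact A0]).
  assert (Ats : A ts).
  { destruct (Req_dec ts 0) as [-> | Hnz]; [exact A0|].
    apply Hclosed; [lra|]. intros s Hs.
    assert (Hex : exists tau, E tau /\ s < tau).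
    { apply NNPP. intro Hn. assert (ts <= s); [|lra].
      apply Hlub. intros tau Htau. apply Rnot_lt_le. intro. apply Hn. eauto. }
    destruct Hex as [tau [[Ht HA] Hst]]. apply Hdown with tau; auto; lra. }
  destruct (Hstep ts Hts0 Ats) as [d [Hd Ad]].
  assert (ts + d <= ts) by (apply Hub; split; auto; lra). lra.
Qed.

Lemma geometric_Lim_seq (a : nat -> R) (B : R) :
  (forall n, Rabs (a (S n) - a n) <= B * (/2)^n) ->
  is_lim_seq a (real (Lim_seq a)) /\ forall n, Rabs (a n - real (Lim_seq a)) <= 2 * B * (/2)^n.
Proof.
  intros H.
  assert (HB : 0 <= B).
  { specialize (H O). simpl in H. pose proof (Rabs_pos (a 1%nat - a 0%nat)). lra. }
  assert (Htail : forall n k, Rabs (a (n + k)%nat - a n) <= 2 * B * (/2)^n * (1 - (/2)^k)).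
  { intros n k. induction k.
    - rewrite Nat.add_0_r, Rminus_diag, Rabs_R0. simpl. lra.
    - replace (n + S k)%nat with (S (n + k)) by lia.
      replace (a (S (n + k)) - a n) with
        ((a (S (n + k)) - a (n + k)%nat) + (a (n + k)%nat - a n)) by ring.
      eapply Rle_trans; [apply Rabs_triang|]. specialize (H (n + k)%nat).
      rewrite pow_add in H. simpl. nra. }
  assert (Hcauchy : forall n m, (n <= m)%nat -> Rabs (a m - a n) <= 2 * B * (/2)^n).
  { intros n m Hnm. replace m with (n + (m - n))%nat by lia.
    eapply Rle_trans; [apply Htail|].
    assert (0 <= (/2)^(m - n)) by (apply pow_le; lra).
    assert (0 <= 2 * B * (/2)^n) by (apply Rmult_le_pos; [lra | apply pow_le; lra]). nra. }
  destruct (Rcomplete.R_complete a) as [l Hl].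
  { intros eps He. destruct (half_pow_small (4 * B) eps He) as [N HN].
    exists N. intros n m Hn Hm. unfold R_dist.
    replace (a n - a m) with ((a n - a N) - (a m - a N)) by ring.
    eapply Rle_lt_trans; [apply Rabs_triang|]. rewrite Rabs_Ropp.
    pose proof (Hcauchy N n Hn). pose proof (Hcauchy N m Hm). lra. }
  apply is_lim_seq_Reals in Hl. rewrite (is_lim_seq_unique _ _ Hl). simpl.
  split; [exact Hl|]. intros n.
  assert (Hl2 : is_lim_seq (fun k => Rabs (a (n + k)%nat - a n)) (Rabs (l - a n))).
  { apply (is_lim_seq_continuous (fun x => Rabs (x - a n))).
    - apply (continuity_pt_comp (fun x => x - a n) Rabs); [reg | apply Rcontinuity_abs].
    - apply (is_lim_seq_incr_n a n l) in Hl.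
      eapply is_lim_seq_ext; [|exact Hl]. intro k. simpl. f_equal. lia. }
  pose proof (is_lim_seq_le _ _ _ _ (fun k => Hcauchy n (n + k)%nat ltac:(lia)) Hl2
    (is_lim_seq_const _)) as Hle.
  simpl in Hle. rewrite Rabs_minus_sym. exact Hle.
Qed.

(** * Riemann integrals of real functions *)

(* Coquelicot states these for a generic normed module, whose [minus], [scal],
   [plus] do not match [Rminus], [Rmult], [Rplus] syntactically. *)
Lemma RInt_minus_R (f g : R -> R) a b : ex_RInt f a b -> ex_RInt g a b ->
  @eq R (RInt (fun x => f x - g x) a b) (RInt f a b - RInt g a b).
Proof. exact (@RInt_minus R_CompleteNormedModule f g a b). Qed.
Lemma RInt_scal_R (f : R -> R) a b k : ex_RInt f a b ->
  @eq R (RInt (fun x => k * f x) a b) (k * RInt f a b).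
Proof. exact (@RInt_scal R_CompleteNormedModule f a b k). Qed.
Lemma RInt_Chasles_R (f : R -> R) a b c : ex_RInt f a b -> ex_RInt f b c ->
  @eq R (RInt f a b + RInt f b c) (RInt f a c).
Proof. exact (@RInt_Chasles R_CompleteNormedModule f a b c). Qed.
Lemma RInt_const_R (a b c : R) :
  @eq R (RInt (V := R_CompleteNormedModule) (fun _ => c) a b) ((b - a) * c).
Proof. exact (@RInt_const R_CompleteNormedModule a b c). Qed.
Lemma RInt_ext_R (f g : R -> R) a b :
  (forall x, Rmin a b < x < Rmax a b -> f x = g x) -> @eq R (RInt f a b) (RInt g a b).
Proof. exact (@RInt_ext R_CompleteNormedModule f g a b). Qed.
Lemma ex_RInt_minus_R (f g : R -> R) a b :
  ex_RInt f a b -> ex_RInt g a b -> ex_RInt (fun x => f x - g x) a b.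
Proof. exact (@ex_RInt_minus R_NormedModule f g a b). Qed.
Lemma ex_RInt_scal_R (f : R -> R) a b k : ex_RInt f a b -> ex_RInt (fun x => k * f x) a b.
Proof. exact (@ex_RInt_scal R_NormedModule f a b k). Qed.
Lemma ex_RInt_ext_R (f g : R -> R) a b :
  (forall x, Rmin a b < x < Rmax a b -> f x = g x) -> ex_RInt f a b -> ex_RInt g a b.
Proof. exact (@ex_RInt_ext R_NormedModule f g a b). Qed.

Lemma ex_RInt_subinterval (f : R -> R) a b c d :
  a <= c -> c <= d -> d <= b -> ex_RInt f a b -> ex_RInt f c d.
Proof.
  intros. apply (@ex_RInt_Chasles_2 R_CompleteNormedModule f a c d); [lra|].
  apply (@ex_RInt_Chasles_1 R_CompleteNormedModule f a d b); [lra | auto].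
Qed.

Lemma Defs_RInt_RInt f a b : ex_RInt f a b -> Defs.RInt f a b = RInt f a b.
Proof.
  intros H. unfold Defs.RInt.
  assert (HP : exists pr : Riemann_integrable f a b, RiemannInt pr = RInt f a b).
  { exists (ex_RInt_Reals_0 _ _ _ H). symmetry. apply RInt_Reals. }
  destruct (epsilon_spec (inhabits 0)
    (fun I => exists pr : Riemann_integrable f a b, RiemannInt pr = I) (ex_intro _ _ HP))
    as [pr Hpr].
  rewrite <- Hpr. symmetry. apply RInt_Reals.
Qed.

Lemma Defs_RInt_point f a : Defs.RInt f a a = 0.
Proof.
  rewrite Defs_RInt_RInt by apply ex_RInt_point.
  exact (@RInt_point R_CompleteNormedModule a f).
Qed.

Lemma ex_RInt_cont_within f a b : a <= b ->
  (forall x, a <= x <= b -> cont_within (fun y => a <= y <= b) f x) -> ex_RInt f a b.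
Proof.
  intros Hab Hc.
  apply ex_RInt_ext_R with (f := fun x => f (clamp a b x)).
  { intros x Hx. rewrite Rmin_left in Hx by lra. rewrite Rmax_right in Hx by lra.
    rewrite clamp_id; lra. }
  apply (@ex_RInt_continuous R_CompleteNormedModule). intros z _.
  apply continuity_pt_filterlim. intros eps Heps.
  destruct (Hc (clamp a b z) (clamp_in a b z Hab) eps Heps) as [d [Hd Hd']].
  exists d; split; auto. intros y [_ Hy]. simpl in *. unfold R_dist in *.
  apply Hd'; [apply clamp_in; lra|].
  eapply Rle_lt_trans; [apply clamp_lipschitz; lra | exact Hy].
Qed.

Lemma ex_RInt_along_path (D : R -> R -> Prop) K (fe fx fs : R -> R) a b :
  cont2_on D K ->
  (forall r, continuity_pt fe r) -> (forall r, continuity_pt fx r) ->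
  (forall r, continuity_pt fs r) ->
  (forall r, a <= r <= b -> D (fx r) (fs r)) -> a <= b ->
  ex_RInt (fun r => fe r * K (fx r) (fs r)) a b.
Proof.
  intros HK He Hx Hs HD Hab. apply ex_RInt_cont_within; auto. intros r Hr.
  apply cont_within_seq. intros u Hu Hl.
  apply is_lim_seq_mult'; [apply is_lim_seq_continuous; auto|].
  apply (proj1 (cont2_on_seq D K) HK (fx r) (fs r) (HD r Hr)); auto;
    apply is_lim_seq_continuous; auto.
Qed.

Lemma RInt_le_R (f g : R -> R) a b : a <= b -> ex_RInt f a b -> ex_RInt g a b ->
  (forall x, a <= x <= b -> f x <= g x) -> RInt f a b <= RInt g a b.
Proof. intros. apply RInt_le; auto. intros; apply H2; lra. Qed.

Lemma RInt_ge0_R f a b : a <= b -> ex_RInt f a b ->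
  (forall x, a <= x <= b -> 0 <= f x) -> 0 <= RInt f a b.
Proof. intros. apply RInt_ge_0; auto. intros; apply H1; lra. Qed.

Lemma Rabs_RInt_le (f g : R -> R) a b : a <= b -> ex_RInt f a b -> ex_RInt g a b ->
  (forall x, a <= x <= b -> Rabs (f x) <= g x) -> Rabs (RInt f a b) <= RInt g a b.
Proof.
  intros Hab Hf Hg H. apply Rabs_le. split.
  - replace (- RInt g a b) with (RInt (fun x => (-1) * g x) a b)
      by (rewrite (RInt_scal_R g a b (-1) Hg);
          change (@eq R (-1 * RInt g a b) (- RInt g a b)); ring).
    apply RInt_le_R; auto; [apply ex_RInt_scal_R; auto|].
    intros x Hx. specialize (H x Hx). apply Rabs_le_between in H. lra.
  - apply RInt_le_R; auto. intros x Hx. specialize (H x Hx). pose proof (Rle_abs (f x)). lra.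
Qed.

Lemma RInt_reflect (f : R -> R) lo t : ex_RInt f lo t ->
  ex_RInt (fun r => f (t - r)) 0 (t - lo) /\
  RInt f lo t = RInt (fun r => f (t - r)) 0 (t - lo).
Proof.
  intros H.
  assert (H' : ex_RInt f ((-1) * 0 + t) ((-1) * (t - lo) + t)).
  { replace ((-1) * 0 + t) with t by ring. replace ((-1) * (t - lo) + t) with lo by ring.
    apply (@ex_RInt_swap R_NormedModule); auto. }
  pose proof (@ex_RInt_comp_lin R_NormedModule f (-1) t 0 (t - lo) H') as Hex.
  pose proof (@RInt_comp_lin R_CompleteNormedModule f (-1) t 0 (t - lo) H') as Heq.
  replace ((-1) * 0 + t) with t in Heq by ring.
  replace ((-1) * (t - lo) + t) with lo in Heq by ring.
  assert (Hext : forall x, scal (-1) (f ((-1) * x + t)) = (-1) * f (t - x)).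
  { intro x. change (scal (-1) (f ((-1) * x + t))) with ((-1) * f ((-1) * x + t)).
    now replace ((-1) * x + t) with (t - x) by ring. }
  assert (Hex2 : ex_RInt (fun r => f (t - r)) 0 (t - lo)).
  { apply ex_RInt_ext_R with
      (f := fun r => (-1) * scal (-1) (f ((-1) * r + t))).
    - intros x _. rewrite Hext. ring.
    - apply ex_RInt_scal_R. exact Hex. }
  split; auto.
  rewrite <- (@opp_RInt_swap R_CompleteNormedModule f lo t H) in Heq.
  change (opp (RInt f lo t)) with (- RInt f lo t) in Heq.
  rewrite (RInt_ext_R _ (fun r => (-1) * f (t - r))) in Heq by (intros; apply Hext).
  rewrite RInt_scal_R in Heq by exact Hex2. lra.
Qed.

Lemma RInt_exp_affine k a t : 0 < k -> a <= t ->
  ex_RInt (fun s => exp (k * (s - t))) a t /\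
  RInt (fun s => exp (k * (s - t))) a t = (1 - exp (k * (a - t))) / k.
Proof.
  intros Hk Hat.
  assert (HI : is_RInt (fun s => exp (k * (s - t))) a t
     (minus ((fun s => exp (k * (s - t)) / k) t) ((fun s => exp (k * (s - t)) / k) a))).
  { apply (@is_RInt_derive R_CompleteNormedModule (fun s => exp (k * (s - t)) / k)).
    - intros x _. auto_derive; auto. replace (x + - t) with (x - t) by ring. field. lra.
    - intros x _. apply continuity_pt_filterlim. reg. }
  split; [eexists; eauto|].
  apply (@is_RInt_unique R_CompleteNormedModule) in HI. rewrite HI. simpl.
  change (minus ?x ?y) with (x - y).
  replace (k * (t - t)) with 0 by ring. rewrite exp_0. field. lra.
Qed.

Lemma RInt_exp_weight_le (E lam lo t : R) : 0 <= E -> 0 <= lam -> lo <= t ->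
  ex_RInt (fun s => exp (s - t) * (E * exp (lam * s))) lo t /\
  RInt (fun s => exp (s - t) * (E * exp (lam * s))) lo t <= E * exp (lam * t) / (1 + lam).
Proof.
  intros HE Hl Hlt. destruct (RInt_exp_affine (1 + lam) lo t ltac:(lra) Hlt) as [Hex Hv].
  assert (Heq : forall s, exp (s - t) * (E * exp (lam * s)) =
      (E * exp (lam * t)) * exp ((1 + lam) * (s - t))).
  { intro s.
    replace (exp (lam * s)) with (exp (lam * t) * exp (lam * s - lam * t))
      by (rewrite <- exp_plus; f_equal; ring).
    replace (exp ((1 + lam) * (s - t))) with (exp (s - t) * exp (lam * s - lam * t))
      by (rewrite <- exp_plus; f_equal; ring).
    ring. }
  split.
  - apply ex_RInt_ext_R with (f := fun s => (E * exp (lam * t)) * exp ((1 + lam) * (s - t))).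
    + intros; rewrite Heq; auto.
    + apply ex_RInt_scal_R; auto.
  - rewrite (RInt_ext_R _ (fun s => (E * exp (lam * t)) * exp ((1 + lam) * (s - t))))
      by (intros; apply Heq).
    rewrite RInt_scal_R, Hv by auto.
    assert (0 <= E * exp (lam * t)) by (apply Rmult_le_pos; auto; left; apply exp_pos).
    assert (0 < exp ((1 + lam) * (lo - t))) by apply exp_pos.
    unfold Rdiv. rewrite <- Rmult_assoc.
    apply Rmult_le_compat_r; [left; apply Rinv_0_lt_compat; lra|].
    assert (0 <= E * exp (lam * t) * exp ((1 + lam) * (lo - t)))
      by (apply Rmult_le_pos; lra).
    lra.
Qed.

Lemma RInt_diff_after (f g : R -> R) a t tau L : a <= t -> tau <= t -> 0 <= L ->
  ex_RInt f a t -> ex_RInt g a t ->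
  (forall s, a <= s <= tau -> f s = g s) ->
  (forall s, tau <= s <= t -> a <= s -> Rabs (f s - g s) <= L) ->
  Rabs (RInt f a t - RInt g a t) <= L * (t - tau).
Proof.
  intros Hat Htau HL Hf Hg Heq Hle.
  set (m := Rmax a tau).
  assert (Hm : a <= m <= t) by (unfold m, Rmax; destruct Rle_dec; lra).
  rewrite <- RInt_minus_R by auto.
  set (h := fun s => f s - g s).
  assert (Hh : ex_RInt h a t) by (apply ex_RInt_minus_R; auto).
  rewrite <- (RInt_Chasles_R h a m t) by (apply ex_RInt_subinterval with a t; auto; lra).
  assert (E0 : RInt h a m = 0).
  { rewrite (RInt_ext_R h (fun _ => 0)); [rewrite RInt_const_R; apply Rmult_0_r|].
    intros s Hs. rewrite Rmin_left in Hs by lra. rewrite Rmax_right in Hs by lra.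
    unfold h. rewrite Heq; [ring|].
    unfold m, Rmax in Hs; destruct Rle_dec in Hs; lra. }
  rewrite E0, Rplus_0_l.
  apply Rle_trans with ((t - m) * L).
  - apply abs_RInt_le_const; [lra | apply ex_RInt_subinterval with a t; auto; lra|].
    intros s Hs. apply Hle; unfold m, Rmax in Hs; destruct Rle_dec in Hs; lra.
  - rewrite Rmult_comm. apply Rmult_le_compat_l; auto. unfold m, Rmax; destruct Rle_dec; lra.
Qed.

Lemma RInt_compare_upper (f f0 : R -> R) m1 m0 e B : 0 <= m1 -> 0 <= m0 ->
  ex_RInt f 0 m1 -> ex_RInt f0 0 m0 ->
  (forall r, 0 <= r <= Rmin m1 m0 -> Rabs (f r - f0 r) <= e) ->
  (forall r, 0 <= r <= m1 -> Rabs (f r) <= B) ->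
  (forall r, 0 <= r <= m0 -> Rabs (f0 r) <= B) ->
  Rabs (RInt f 0 m1 - RInt f0 0 m0) <= Rmin m1 m0 * e + Rabs (m1 - m0) * B.
Proof.
  intros Hm1 Hm0 Hf Hf0 Hdiff HB HB0.
  set (mn := Rmin m1 m0).
  assert (Hmn : 0 <= mn /\ mn <= m1 /\ mn <= m0) by (unfold mn, Rmin; destruct Rle_dec; lra).
  assert (Hfa : ex_RInt f 0 mn) by (apply ex_RInt_subinterval with 0 m1; auto; lra).
  assert (Hfb : ex_RInt f mn m1) by (apply ex_RInt_subinterval with 0 m1; auto; lra).
  assert (Hf0a : ex_RInt f0 0 mn) by (apply ex_RInt_subinterval with 0 m0; auto; lra).
  assert (Hf0b : ex_RInt f0 mn m0) by (apply ex_RInt_subinterval with 0 m0; auto; lra).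
  rewrite <- (RInt_Chasles_R f 0 mn m1), <- (RInt_Chasles_R f0 0 mn m0) by auto.
  assert (I1 : Rabs (RInt f 0 mn - RInt f0 0 mn) <= (mn - 0) * e).
  { rewrite <- RInt_minus_R by auto.
    apply abs_RInt_le_const; [lra | apply ex_RInt_minus_R; auto|]. auto. }
  assert (I2 : Rabs (RInt f mn m1) <= (m1 - mn) * B)
    by (apply abs_RInt_le_const; auto; [lra | intros r Hr; apply HB; lra]).
  assert (I3 : Rabs (RInt f0 mn m0) <= (m0 - mn) * B)
    by (apply abs_RInt_le_const; auto; [lra | intros r Hr; apply HB0; lra]).
  assert (Hrest : m1 - mn + (m0 - mn) = Rabs (m1 - m0))
    by (unfold mn, Rmin; destruct Rle_dec; unfold Rabs; destruct Rcase_abs; lra).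
  replace (RInt f 0 mn + RInt f mn m1 - (RInt f0 0 mn + RInt f0 mn m0)) with
    ((RInt f 0 mn - RInt f0 0 mn) + RInt f mn m1 - RInt f0 mn m0) by ring.
  eapply Rle_trans; [apply Rabs_triang|]. rewrite Rabs_Ropp.
  eapply Rle_trans; [apply Rplus_le_compat_r, Rabs_triang|].
  rewrite <- Hrest. lra.
Qed.

Definition strip (Dx : R -> Prop) (X t : R) : Prop := Dx X /\ 0 <= t.

Section Parametric_integral.

Variables (Dx : R -> Prop) (K : R -> R -> R) (sigma : R).
Hypothesis K_cont : cont2_on (strip Dx) K.

Lemma path_kernel_equicont X0 t0 m0 e : 0 < e -> 0 <= m0 <= t0 ->
  (forall r, 0 <= r <= m0 -> Dx (X0 - sigma * r)) ->
  exists d, 0 < d /\ forall r, 0 <= r <= m0 -> forall X t,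
    Rabs (X - X0) < d -> Rabs (t - t0) < d -> Dx (X - sigma * r) -> 0 <= t - r ->
    Rabs (K (X - sigma * r) (t - r) - K (X0 - sigma * r) (t0 - r)) < e.
Proof.
  intros He Hm0 Hpath.
  apply (local_to_uniform 0 m0 (fun r d => forall X t, Rabs (X - X0) < d ->
     Rabs (t - t0) < d -> Dx (X - sigma * r) -> 0 <= t - r ->
     Rabs (K (X - sigma * r) (t - r) - K (X0 - sigma * r) (t0 - r)) < e)); [lra| |].
  { intros x dl dl' H [H1 H2] X t H3 H4. apply H; lra. }
  intros r0 Hr0.
  assert (HP0 : strip Dx (X0 - sigma * r0) (t0 - r0)) by (split; [apply Hpath|]; lra).
  destruct (K_cont _ _ HP0 (e / 2) ltac:(lra)) as [d0 [Hd0 Hd0']].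
  pose proof (Rabs_pos sigma).
  set (d1 := d0 / (2 + Rabs sigma)).
  assert (Hd1 : 0 < d1) by (unfold d1; apply Rdiv_lt_0_compat; lra).
  assert (Hd1b : d1 * (2 + Rabs sigma) = d0) by (unfold d1; field; lra).
  exists d1. split; auto. intros y Hy Hyr X t HX Ht HDy Hty.
  assert (Hdr : Rabs (sigma * y - sigma * r0) <= Rabs sigma * d1).
  { replace (sigma * y - sigma * r0) with (sigma * (y - r0)) by ring. rewrite Rabs_mult.
    apply Rmult_le_compat_l; lra. }
  assert (A1 : Rabs (K (X - sigma * y) (t - y) - K (X0 - sigma * r0) (t0 - r0)) < e / 2).
  { apply Hd0'; [split; auto| |].
    - replace (X - sigma * y - (X0 - sigma * r0)) with ((X - X0) - (sigma * y - sigma * r0))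
        by ring.
      eapply Rle_lt_trans; [apply Rabs_triang|]. rewrite Rabs_Ropp. nra.
    - replace (t - y - (t0 - r0)) with ((t - t0) - (y - r0)) by ring.
      eapply Rle_lt_trans; [apply Rabs_triang|]. rewrite Rabs_Ropp. nra. }
  assert (A2 : Rabs (K (X0 - sigma * y) (t0 - y) - K (X0 - sigma * r0) (t0 - r0)) < e / 2).
  { apply Hd0'; [split; [apply Hpath|]; lra| |].
    - replace (X0 - sigma * y - (X0 - sigma * r0)) with (- (sigma * y - sigma * r0)) by ring.
      rewrite Rabs_Ropp. nra.
    - replace (t0 - y - (t0 - r0)) with (- (y - r0)) by ring. rewrite Rabs_Ropp. nra. }
  replace (K (X - sigma * y) (t - y) - K (X0 - sigma * y) (t0 - y)) with
    ((K (X - sigma * y) (t - y) - K (X0 - sigma * r0) (t0 - r0)) -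
     (K (X0 - sigma * y) (t0 - y) - K (X0 - sigma * r0) (t0 - r0))) by ring.
  eapply Rle_lt_trans; [apply Rabs_triang|]. rewrite Rabs_Ropp. lra.
Qed.

Variables (B : R) (m : R -> R -> R).
Hypothesis K_bound : forall Y s, strip Dx Y s -> Rabs (K Y s) <= B.
Hypothesis m_cont : cont2_on (strip Dx) m.
Hypothesis m_bound : forall X t, strip Dx X t -> 0 <= m X t <= t.
Hypothesis path_dom : forall X t r, strip Dx X t -> 0 <= r <= m X t -> Dx (X - sigma * r).

Lemma path_integrand_bound X t r : strip Dx X t -> 0 <= r <= m X t ->
  Rabs (exp (- r) * K (X - sigma * r) (t - r)) <= Rabs B + 1.
Proof.
  intros HD Hr. pose proof (m_bound X t HD).
  rewrite Rabs_mult, Rabs_right by (apply Rle_ge, Rlt_le, exp_pos).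
  pose proof (Rle_abs B). pose proof (Rabs_pos B).
  apply Rle_trans with (1 * (Rabs B + 1)); [|lra].
  apply Rmult_le_compat; [left; apply exp_pos | apply Rabs_pos | apply exp_le_1; lra|].
  apply Rle_trans with B; [|lra]. apply K_bound. split; [apply (path_dom X t)|]; auto; lra.
Qed.

Lemma ex_RInt_path_integrand X t : strip Dx X t ->
  ex_RInt (fun r => exp (- r) * K (X - sigma * r) (t - r)) 0 (m X t).
Proof.
  intros HD. pose proof (m_bound X t HD).
  apply (ex_RInt_along_path (strip Dx) K (fun r => exp (- r)) (fun r => X - sigma * r)
    (fun r => t - r)); auto; try (intro; reg); [|lra].
  intros r Hr. split; [apply (path_dom X t)|]; auto; lra.
Qed.

Lemma param_RInt_cont : cont2_on (strip Dx)
  (fun X t => RInt (fun r => exp (- r) * K (X - sigma * r) (t - r)) 0 (m X t)).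
Proof.
  intros X0 t0 HD0 eps Heps.
  set (m0 := m X0 t0). assert (Hm0 : 0 <= m0 <= t0) by (apply m_bound; auto).
  set (B' := Rabs B + 1). assert (HB' : 0 < B') by (unfold B'; pose proof (Rabs_pos B); lra).
  set (e1 := eps / (2 * (m0 + 1))).
  assert (He1 : 0 < e1) by (unfold e1; apply Rdiv_lt_0_compat; lra).
  destruct (path_kernel_equicont X0 t0 m0 e1 He1 Hm0) as [d2 [Hd2 Hd2']].
  { intros r Hr. apply (path_dom X0 t0); auto. }
  set (e2 := eps / (4 * B')).
  assert (He2 : 0 < e2) by (unfold e2; apply Rdiv_lt_0_compat; lra).
  destruct (m_cont X0 t0 HD0 e2 He2) as [d3 [Hd3 Hd3']].
  exists (Rmin d2 d3). split; [apply Rmin_pos; auto|].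
  intros X t HD HX Ht. pose proof (Rmin_l d2 d3). pose proof (Rmin_r d2 d3).
  assert (Hmm : Rabs (m X t - m0) < e2) by (apply Hd3'; auto; lra).
  pose proof (m_bound X t HD).
  eapply Rle_lt_trans.
  - apply (RInt_compare_upper _ _ (m X t) m0 e1 B'); try lra;
      try (apply ex_RInt_path_integrand; auto);
      try (intros r Hr; apply path_integrand_bound; auto).
    intros r Hr. pose proof (Rmin_l (m X t) m0). pose proof (Rmin_r (m X t) m0).
    rewrite <- Rmult_minus_distr_l, Rabs_mult, Rabs_right
      by (apply Rle_ge, Rlt_le, exp_pos).
    apply Rle_trans with (1 * e1); [|lra].
    apply Rmult_le_compat; [left; apply exp_pos | apply Rabs_pos | apply exp_le_1; lra|].
    left. apply Hd2'; try lra. apply (path_dom X t); auto; lra.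
  - assert (m0 * e1 < eps / 2).
    { unfold e1. apply Rmult_lt_reg_r with (2 * (m0 + 1)); [lra|].
      replace (m0 * (eps / (2 * (m0 + 1))) * (2 * (m0 + 1))) with (m0 * eps)
        by (field; lra). nra. }
    assert (e2 * B' = eps / 4) by (unfold e2; field; lra).
    assert (Rmin (m X t) m0 * e1 <= m0 * e1)
      by (apply Rmult_le_compat_r; [lra | apply Rmin_r]).
    assert (Rabs (m X t - m0) * B' <= e2 * B') by (apply Rmult_le_compat_r; lra).
    lra.
Qed.

End Parametric_integral.

Lemma cont2_on_geometric_limit Dx (G : nat -> R -> R -> R) (L : R -> R -> R) K lam :
  0 <= K -> 0 <= lam -> (forall n, cont2_on (strip Dx) (G n)) ->
  (forall n X t, Dx X -> 0 <= t -> Rabs (G n X t - L X t) <= K * exp (lam * t) * (/2)^n) ->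
  cont2_on (strip Dx) L.
Proof.
  intros HK Hlam Hc Hb X t [HX Ht] eps He.
  destruct (half_pow_small (K * exp (lam * (t + 1))) (eps / 3) ltac:(lra)) as [n Hn].
  destruct (Hc n X t (conj HX Ht) (eps / 3) ltac:(lra)) as [d [Hd Hd']].
  exists (Rmin d 1). split; [apply Rmin_pos; lra|].
  intros X' t' [HX' Ht'] H1 H2. pose proof (Rmin_l d 1). pose proof (Rmin_r d 1).
  specialize (Hd' X' t' (conj HX' Ht') ltac:(lra) ltac:(lra)).
  pose proof (Hb n X t HX Ht) as B1. pose proof (Hb n X' t' HX' Ht') as B2.
  assert (Hm : forall s, s <= t + 1 ->
      K * exp (lam * s) * (/2)^n <= K * exp (lam * (t + 1)) * (/2)^n).
  { intros s Hs. apply Rmult_le_compat_r; [apply pow_le; lra|].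
    apply Rmult_le_compat_l; [lra|]. apply exp_le_exp. apply Rmult_le_compat_l; auto. }
  assert (t' <= t + 1) by (unfold Rabs in H2; destruct Rcase_abs in H2; lra).
  pose proof (Hm t ltac:(lra)). pose proof (Hm t' ltac:(lra)).
  replace (L X' t' - L X t) with
    (- (G n X' t' - L X' t') + (G n X' t' - G n X t) + (G n X t - L X t)) by ring.
  eapply Rle_lt_trans; [apply Rabs_triang|].
  eapply Rle_lt_trans; [apply Rplus_le_compat_r, Rabs_triang|].
  rewrite Rabs_Ropp. lra.
Qed.

(** * The abstract fixed-point problem *)

(* A component travelling along the characteristics [X + speed * (s - t)]:
   [source] is the transported datum, and the Duhamel integral runs over
   [start X t <= s <= t], the times the characteristic spends in the domain. *)
Record characteristic (Dx : R -> Prop) := {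
  speed : R;
  source : R -> R -> R;
  start : R -> R -> R;
  source_max : R;
  source_cont : cont2_on (strip Dx) source;
  source_bound : forall X t, Dx X -> 0 <= t -> 0 <= source X t <= source_max * exp (- t);
  start_cont : cont2_on (strip Dx) start;
  start_bound : forall X t, Dx X -> 0 <= t -> 0 <= start X t <= t;
  path_in : forall X t s, Dx X -> 0 <= t -> start X t <= s <= t -> Dx (X + speed * (s - t))
}.

Arguments speed {Dx}. Arguments source {Dx}. Arguments start {Dx}.
Arguments source_max {Dx}. Arguments source_cont {Dx}. Arguments source_bound {Dx}.
Arguments start_cont {Dx}. Arguments start_bound {Dx}. Arguments path_in {Dx}.

(* The two unknowns are indexed by [bool]: [true] for [U], [false] for [V]. *)
Record problem := {
  dom : R -> Prop;
  alpha : R;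
  beta : R -> R;
  beta_min : R;
  beta_max : R;
  char : bool -> characteristic dom;
  alpha_ge0 : 0 <= alpha;
  beta_min_gt0 : 0 < beta_min;
  beta_bound : forall Y, dom Y -> beta_min <= beta Y <= beta_max;
  beta_cont : forall Y, dom Y -> cont_within dom beta Y;
  dom_unit : forall Y, 0 <= Y <= 1 -> dom Y
}.

Lemma cross_diff_bound b p q p' q' : 0 <= b -> 0 <= p -> 0 <= q ->
  Rabs (p' * (1 + b * (p + q)) - p * (1 + b * (p' + q')))
    <= (1 + b * (p + q)) * (Rabs (p' - p) + Rabs (q' - q)).
Proof.
  intros Hb Hp Hq.
  assert (0 <= b * p) by (apply Rmult_le_pos; lra).
  assert (0 <= b * q) by (apply Rmult_le_pos; lra).
  pose proof (Rabs_pos (p' - p)). pose proof (Rabs_pos (q' - q)).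
  replace (p' * (1 + b * (p + q)) - p * (1 + b * (p' + q'))) with
    ((p' - p) * (1 + b * q) - b * p * (q' - q)) by ring.
  eapply Rle_trans; [apply Rabs_triang|]. rewrite Rabs_Ropp, !Rabs_mult.
  rewrite (Rabs_right (1 + b * q)), (Rabs_right b), (Rabs_right p) by lra.
  assert (Rabs (p' - p) * (1 + b * q) <= (1 + b * (p + q)) * Rabs (p' - p))
    by (rewrite Rmult_comm; apply Rmult_le_compat_r; nra).
  assert (b * p * Rabs (q' - q) <= (1 + b * (p + q)) * Rabs (q' - q))
    by (apply Rmult_le_compat_r; nra).
  lra.
Qed.

Lemma ratio_lipschitz (j : bool) (al b u v u' v' d : R) :
  0 <= al -> 0 <= b -> 0 <= u -> 0 <= v -> 0 < d -> d <= 1 + b * (u' + v') ->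
  Rabs (al * (if j then u' else v') / (1 + b * (u' + v'))
        - al * (if j then u else v) / (1 + b * (u + v)))
    <= al / d * (Rabs (u' - u) + Rabs (v' - v)).
Proof.
  intros Hal Hb Hu Hv Hd Hd'.
  pose proof (Rabs_pos (u' - u)). pose proof (Rabs_pos (v' - v)).
  set (w := if j then u else v). set (w' := if j then u' else v').
  set (D := 1 + b * (u + v)). set (D' := 1 + b * (u' + v')).
  assert (HD : 1 <= D) by (unfold D; nra).
  assert (HD' : d <= D') by (unfold D'; lra).
  assert (Hnum : Rabs (w' * D - w * D') <= D * (Rabs (u' - u) + Rabs (v' - v))).
  { unfold w, w', D, D'. destruct j; [apply cross_diff_bound; auto|].
    rewrite (Rplus_comm (Rabs (u' - u))), (Rplus_comm u), (Rplus_comm u').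
    apply cross_diff_bound; auto. }
  replace (al * w' / D' - al * w / D) with (al * (w' * D - w * D') / (D' * D))
    by (field; lra).
  unfold Rdiv. rewrite !Rabs_mult, Rabs_inv, (Rabs_right al) by lra.
  rewrite (Rabs_right (D' * D)) by (apply Rle_ge, Rmult_le_pos; lra).
  apply Rle_trans with (al * (D * (Rabs (u' - u) + Rabs (v' - v))) * / (D' * D)).
  { apply Rmult_le_compat_r; [left; apply Rinv_0_lt_compat, Rmult_lt_0_compat; lra|].
    apply Rmult_le_compat_l; auto. }
  replace (al * (D * (Rabs (u' - u) + Rabs (v' - v))) * / (D' * D)) with
    (al * / D' * (Rabs (u' - u) + Rabs (v' - v))) by (field; lra).
  apply Rmult_le_compat_r; [lra|]. apply Rmult_le_compat_l; auto.
  apply Rinv_le_contravar; lra.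
Qed.

Section Fixed_point_map.

Variable P : problem.

Notation Dx := (dom P).

Definition kernel (G : R -> R -> R) (F : bool -> R -> R -> R) (Y s : R) : R :=
  alpha P * G Y s / (1 + beta P Y * (F true Y s + F false Y s)).

Definition duhamel (ch : characteristic Dx) (K : R -> R -> R) (X t : R) : R :=
  Defs.RInt (fun s => exp (s - t) * K (X + speed ch * (s - t)) s) (start ch X t) t.

Definition Phi (F : bool -> R -> R -> R) (i : bool) (X t : R) : R :=
  source (char P i) X t + duhamel (char P i) (kernel (F (negb i)) F) X t.

Definition admissible (F : bool -> R -> R -> R) : Prop :=
  (forall i, cont2_on (strip Dx) (F i)) /\
  (forall i X t, Dx X -> 0 <= t -> 0 <= F i X t).

Definition gap (F' F : bool -> R -> R -> R) (Y s : R) : R :=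
  Rabs (F' true Y s - F true Y s) + Rabs (F' false Y s - F false Y s).

Lemma gap_ge0 F' F Y s : 0 <= gap F' F Y s.
Proof. unfold gap. pose proof (Rabs_pos (F' true Y s - F true Y s)).
  pose proof (Rabs_pos (F' false Y s - F false Y s)). lra. Qed.

Lemma Rabs_le_gap F' F i Y s : Rabs (F' i Y s - F i Y s) <= gap F' F Y s.
Proof. unfold gap. pose proof (Rabs_pos (F' true Y s - F true Y s)).
  pose proof (Rabs_pos (F' false Y s - F false Y s)). destruct i; lra. Qed.

Lemma kernel_cont (D : R -> R -> Prop) (G : R -> R -> R) F delta :
  (forall Y s, D Y s -> Dx Y) -> 0 < delta ->
  cont2_on D G -> cont2_on D (F true) -> cont2_on D (F false) ->
  (forall Y s, D Y s -> delta <= 1 + beta P Y * (F true Y s + F false Y s)) ->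
  cont2_on D (kernel G F).
Proof.
  intros HDx Hdelta HG HU HV Hden. rewrite cont2_on_seq in *.
  intros Y s HD x y Hxy Hx Hy. apply is_lim_seq_div'.
  - apply is_lim_seq_scal_l with (lu := Finite (G Y s)). apply HG; auto.
  - apply is_lim_seq_plus' with (l1 := 1); [apply is_lim_seq_const|].
    apply is_lim_seq_mult'; [|apply is_lim_seq_plus'; [apply HU | apply HV]; auto].
    apply (proj1 (cont_within_seq _ _ _) (beta_cont P Y (HDx Y s HD))); auto.
    intro n; apply (HDx _ _ (Hxy n)).
  - specialize (Hden Y s HD). lra.
Qed.

Lemma kernel_den_ge1 F Y s : admissible F -> Dx Y -> 0 <= s ->
  1 <= 1 + beta P Y * (F true Y s + F false Y s).
Proof.
  intros [_ Hn] HY Hs. pose proof (Hn true Y s HY Hs). pose proof (Hn false Y s HY Hs).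
  pose proof (beta_bound P Y HY). pose proof (beta_min_gt0 P).
  assert (0 <= beta P Y * (F true Y s + F false Y s)) by (apply Rmult_le_pos; lra). lra.
Qed.

Lemma kernel_cont_admissible F j : admissible F -> cont2_on (strip Dx) (kernel (F j) F).
Proof.
  intros HF. apply kernel_cont with 1; try apply HF; try lra.
  - intros Y s []; auto.
  - intros Y s []. apply kernel_den_ge1; auto.
Qed.

Lemma kernel_bound F j Y s : admissible F -> Dx Y -> 0 <= s ->
  0 <= kernel (F j) F Y s <= alpha P / beta_min P.
Proof.
  intros HF HY Hs. pose proof (kernel_den_ge1 F Y s HF HY Hs) as Hd.
  destruct HF as [_ Hn]. pose proof (Hn true Y s HY Hs). pose proof (Hn false Y s HY Hs).
  pose proof (beta_bound P Y HY). pose proof (beta_min_gt0 P). pose proof (alpha_ge0 P).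
  set (w := F j Y s). assert (Hw : 0 <= w <= F true Y s + F false Y s)
    by (unfold w; destruct j; lra).
  unfold kernel. fold w. split.
  - apply Rmult_le_pos; [apply Rmult_le_pos; lra | left; apply Rinv_0_lt_compat; lra].
  - unfold Rdiv. apply Rmult_le_reg_r with (1 + beta P Y * (F true Y s + F false Y s)); [lra|].
    rewrite Rmult_assoc, Rinv_l, Rmult_1_r by lra.
    apply Rmult_le_reg_r with (beta_min P); [lra|].
    replace (alpha P * / beta_min P * (1 + beta P Y * (F true Y s + F false Y s)) * beta_min P)
      with (alpha P * (1 + beta P Y * (F true Y s + F false Y s))) by (field; lra).
    rewrite Rmult_assoc. apply Rmult_le_compat_l; auto.
    assert (w * beta_min P <= beta P Y * (F true Y s + F false Y s)); [|lra].
    apply Rle_trans with (beta P Y * w); [rewrite Rmult_comm; apply Rmult_le_compat_r|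
      apply Rmult_le_compat_l]; lra.
Qed.

Lemma kernel_max_ge0 : 0 <= alpha P / beta_min P.
Proof. pose proof (alpha_ge0 P). pose proof (beta_min_gt0 P). apply Rdiv_le_0_compat; lra. Qed.

Lemma kernel_lipschitz F' F j Y s d : admissible F -> Dx Y -> 0 <= s -> 0 < d ->
  d <= 1 + beta P Y * (F' true Y s + F' false Y s) ->
  Rabs (kernel (F' j) F' Y s - kernel (F j) F Y s) <= alpha P / d * gap F' F Y s.
Proof.
  intros [_ Hn] HY Hs Hd Hd'. pose proof (beta_bound P Y HY). pose proof (beta_min_gt0 P).
  unfold kernel, gap.
  replace (F' j Y s) with (if j then F' true Y s else F' false Y s) by (destruct j; auto).
  replace (F j Y s) with (if j then F true Y s else F false Y s) by (destruct j; auto).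
  apply ratio_lipschitz; auto; [apply alpha_ge0 | lra].
Qed.

Lemma ex_RInt_duhamel (D : R -> R -> Prop) (ch : characteristic Dx) K X t : cont2_on D K ->
  (forall Y s, Dx Y -> 0 <= s <= t -> D Y s) -> Dx X -> 0 <= t ->
  ex_RInt (fun s => exp (s - t) * K (X + speed ch * (s - t)) s) (start ch X t) t.
Proof.
  intros HK HD HX Ht. pose proof (start_bound ch X t HX Ht).
  apply (ex_RInt_along_path D K (fun s => exp (s - t)) (fun s => X + speed ch * (s - t))
    (fun s => s)); auto; try (intro; reg); [|lra].
  intros r Hr. apply HD; [apply (path_in ch); auto | lra].
Qed.

Lemma ex_RInt_duhamel_strip (ch : characteristic Dx) K X t :
  cont2_on (strip Dx) K -> Dx X -> 0 <= t ->
  ex_RInt (fun s => exp (s - t) * K (X + speed ch * (s - t)) s) (start ch X t) t.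
Proof.
  intros. apply ex_RInt_duhamel with (strip Dx); auto. intros Y s HY Hs. split; auto; lra.
Qed.

Lemma duhamel_bound (ch : characteristic Dx) K B X t : cont2_on (strip Dx) K ->
  (forall Y s, Dx Y -> 0 <= s -> 0 <= K Y s <= B) -> Dx X -> 0 <= t ->
  0 <= duhamel ch K X t <= B * (1 - exp (start ch X t - t)).
Proof.
  intros HK HB HX Ht. pose proof (start_bound ch X t HX Ht).
  pose proof (ex_RInt_duhamel_strip ch K X t HK HX Ht) as Hex.
  unfold duhamel. rewrite Defs_RInt_RInt by exact Hex.
  destruct (RInt_exp_affine 1 (start ch X t) t ltac:(lra) ltac:(lra)) as [He1 Hv].
  assert (HKs : forall s, start ch X t <= s <= t -> 0 <= K (X + speed ch * (s - t)) s <= B)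
    by (intros s Hs; apply HB; [apply (path_in ch); auto | lra]).
  split.
  - apply RInt_ge0_R; auto; [lra|]. intros s Hs.
    apply Rmult_le_pos; [left; apply exp_pos | apply HKs; auto].
  - apply Rle_trans with (RInt (fun s => B * exp (1 * (s - t))) (start ch X t) t).
    + apply RInt_le_R; auto; [lra | apply ex_RInt_scal_R; auto|].
      intros s Hs. rewrite Rmult_1_l, Rmult_comm.
      apply Rmult_le_compat_r; [left; apply exp_pos | apply HKs; auto].
    + rewrite RInt_scal_R, Hv by auto. rewrite Rmult_1_l. right. field.
Qed.

(* Substituting [s = t - r] puts the moving endpoint [start X t] into the upper
   limit of an integrand that depends continuously on [(X, t)]. *)
Lemma duhamel_cont (ch : characteristic Dx) K B : cont2_on (strip Dx) K ->
  (forall Y s, Dx Y -> 0 <= s -> Rabs (K Y s) <= B) ->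
  cont2_on (strip Dx) (duhamel ch K).
Proof.
  intros HK HB.
  apply cont2_on_ext with (f := fun X t =>
     RInt (fun r => exp (- r) * K (X - speed ch * r) (t - r)) 0 (t - start ch X t)).
  - apply param_RInt_cont with B; auto.
    + intros Y s []; auto.
    + apply cont2_on_minus; [|apply start_cont].
      apply (cont2_on_ext _ _ _ (cont2_on_affine _ 1 0 0)). intros; ring.
    + intros X t [HX Ht]. pose proof (start_bound ch X t HX Ht). lra.
    + intros X t r [HX Ht] Hr. pose proof (start_bound ch X t HX Ht).
      replace (X - speed ch * r) with (X + speed ch * ((t - r) - t)) by ring.
      apply (path_in ch); auto. lra.
  - intros X t [HX Ht]. unfold duhamel.
    rewrite Defs_RInt_RInt by (apply ex_RInt_duhamel_strip; auto).
    destruct (RInt_reflect _ _ _ (ex_RInt_duhamel_strip ch K X t HK HX Ht)) as [_ ->].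
    apply RInt_ext_R. intros r _.
    replace (t - r - t) with (- r) by ring.
    replace (X + speed ch * - r) with (X - speed ch * r) by ring. auto.
Qed.

Lemma duhamel_diff_exp (ch : characteristic Dx) K' K L lam X t :
  cont2_on (strip Dx) K' -> cont2_on (strip Dx) K -> 0 <= L -> 0 <= lam ->
  (forall Y s, Dx Y -> 0 <= s -> Rabs (K' Y s - K Y s) <= L * exp (lam * s)) ->
  Dx X -> 0 <= t ->
  Rabs (duhamel ch K' X t - duhamel ch K X t) <= L * exp (lam * t) / (1 + lam).
Proof.
  intros HK' HK HL Hlam Hdiff HX Ht. pose proof (start_bound ch X t HX Ht).
  pose proof (ex_RInt_duhamel_strip ch K X t HK HX Ht).
  pose proof (ex_RInt_duhamel_strip ch K' X t HK' HX Ht).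
  unfold duhamel. rewrite !Defs_RInt_RInt, <- RInt_minus_R by auto.
  destruct (RInt_exp_weight_le L lam (start ch X t) t HL Hlam ltac:(lra)) as [Hex Hb].
  eapply Rle_trans; [|exact Hb].
  apply Rabs_RInt_le; auto; [lra | apply ex_RInt_minus_R; auto|].
  intros s Hs. rewrite <- Rmult_minus_distr_l, Rabs_mult, Rabs_right
    by (apply Rle_ge; left; apply exp_pos).
  apply Rmult_le_compat_l; [left; apply exp_pos|].
  apply Hdiff; [apply (path_in ch); auto | lra].
Qed.

Lemma duhamel_diff_after (D : R -> R -> Prop) (ch : characteristic Dx) K' K tau L X t :
  cont2_on D K' -> (forall Y s, Dx Y -> 0 <= s <= t -> D Y s) ->
  cont2_on (strip Dx) K -> 0 <= L -> tau <= t ->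
  (forall Y s, Dx Y -> 0 <= s <= tau -> K' Y s = K Y s) ->
  (forall Y s, Dx Y -> tau <= s <= t -> Rabs (K' Y s - K Y s) <= L) ->
  Dx X -> 0 <= t ->
  Rabs (duhamel ch K' X t - duhamel ch K X t) <= L * (t - tau).
Proof.
  intros HK' HD HK HL Htau Heq Hdiff HX Ht. pose proof (start_bound ch X t HX Ht).
  pose proof (ex_RInt_duhamel D ch K' X t HK' HD HX Ht).
  pose proof (ex_RInt_duhamel_strip ch K X t HK HX Ht).
  unfold duhamel. rewrite !Defs_RInt_RInt by auto.
  apply RInt_diff_after; auto; try lra.
  - intros s Hs. rewrite Heq; auto; [apply (path_in ch); auto|]; lra.
  - intros s Hs Hs'. rewrite <- Rmult_minus_distr_l, Rabs_mult, Rabs_right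
      by (apply Rle_ge; left; apply exp_pos).
    apply Rle_trans with (1 * L); [|lra].
    apply Rmult_le_compat; [left; apply exp_pos | apply Rabs_pos | apply exp_le_1; lra|].
    apply Hdiff; [apply (path_in ch); auto|]; lra.
Qed.

Lemma source_max_ge0 i : 0 <= source_max (char P i).
Proof.
  destruct (source_bound (char P i) 0 0 (dom_unit P 0 ltac:(lra)) (Rle_refl 0)) as [H0 H].
  rewrite Ropp_0, exp_0 in H. lra.
Qed.

Lemma kernel_abs_bound F j : admissible F ->
  forall Y s, Dx Y -> 0 <= s -> Rabs (kernel (F j) F Y s) <= alpha P / beta_min P.
Proof.
  intros HF Y s HY Hs. destruct (kernel_bound F j Y s HF HY Hs). rewrite Rabs_right; lra.
Qed.

Lemma Phi_sub F' F i X t : Phi F' i X t - Phi F i X t =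
  duhamel (char P i) (kernel (F' (negb i)) F') X t -
  duhamel (char P i) (kernel (F (negb i)) F) X t.
Proof. unfold Phi. ring. Qed.

Lemma Phi_admissible F : admissible F -> admissible (Phi F).
Proof.
  intros HF. split.
  - intro i. apply cont2_on_plus; [apply source_cont|].
    apply duhamel_cont with (alpha P / beta_min P);
      [apply kernel_cont_admissible | apply kernel_abs_bound]; auto.
  - intros i X t HX Ht. unfold Phi.
    destruct (source_bound (char P i) X t HX Ht).
    destruct (duhamel_bound (char P i) (kernel (F (negb i)) F) (alpha P / beta_min P) X t);
      auto; [apply kernel_cont_admissible; auto | intros; apply kernel_bound; auto | lra].
Qed.

Lemma decay_plus_gain_le_max (M A lo t : R) : 0 <= M -> 0 <= A -> 0 <= lo <= t ->
  M * exp (- t) + A * (1 - exp (lo - t)) <= Rmax M A.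
Proof.
  intros HM HA Hlo.
  assert (exp (- t) <= exp (lo - t)) by (apply exp_le_exp; lra).
  assert (exp (lo - t) <= 1) by (apply exp_le_1; lra).
  assert (0 < exp (- t)) by apply exp_pos.
  pose proof (Rmax_l M A). pose proof (Rmax_r M A).
  apply Rle_trans with (Rmax M A * exp (- t) + Rmax M A * (1 - exp (- t))); [|right; ring].
  apply Rplus_le_compat; [apply Rmult_le_compat_r; lra|].
  apply Rle_trans with (A * (1 - exp (- t))); [apply Rmult_le_compat_l|
    apply Rmult_le_compat_r]; lra.
Qed.

Lemma Phi_bound F i X t : admissible F -> Dx X -> 0 <= t ->
  Phi F i X t <= Rmax (source_max (char P i)) (alpha P / beta_min P).
Proof.
  intros HF HX Ht. unfold Phi.
  destruct (source_bound (char P i) X t HX Ht).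
  destruct (duhamel_bound (char P i) (kernel (F (negb i)) F) (alpha P / beta_min P) X t);
    auto; [apply kernel_cont_admissible; auto | intros; apply kernel_bound; auto|].
  pose proof (decay_plus_gain_le_max (source_max (char P i)) (alpha P / beta_min P)
    (start (char P i) X t) t (source_max_ge0 i) kernel_max_ge0
    (start_bound (char P i) X t HX Ht)). lra.
Qed.

Definition growth : R := 4 * alpha P.

(* In the norm weighted by [exp (- growth * t)], [Phi] is a 1/2-contraction:
   the Lipschitz constant [alpha] of the kernel is damped to
   [2 alpha / (1 + growth) <= 1/2]. *)
Lemma Phi_gap_contract F' F E X t : admissible F' -> admissible F -> 0 <= E ->
  (forall Y s, Dx Y -> 0 <= s -> gap F' F Y s <= E * exp (growth * s)) -> Dx X -> 0 <= t ->
  gap (Phi F') (Phi F) X t <= / 2 * (E * exp (growth * t)).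
Proof.
  intros HF' HF HE Hgap HX Ht. pose proof (alpha_ge0 P) as Hal.
  assert (Hg : 0 <= growth) by (unfold growth; lra).
  assert (Hi : forall i, Rabs (Phi F' i X t - Phi F i X t) <=
      alpha P * E * exp (growth * t) / (1 + growth)).
  { intro i. rewrite Phi_sub.
    apply duhamel_diff_exp; auto; try apply kernel_cont_admissible; auto;
      [apply Rmult_le_pos; auto|].
    intros Y s HY Hs. eapply Rle_trans.
    - apply kernel_lipschitz with (d := 1); auto; [lra | apply kernel_den_ge1; auto].
    - rewrite Rdiv_1_r, Rmult_assoc. apply Rmult_le_compat_l; auto. }
  unfold gap. pose proof (Hi true). pose proof (Hi false).
  set (Q := E * exp (growth * t)).
  assert (0 <= Q) by (apply Rmult_le_pos; auto; left; apply exp_pos).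
  assert (Hq : / 4 * Q - alpha P * E * exp (growth * t) / (1 + growth) = Q / (4 * (1 + growth)))
    by (unfold Q, growth; field; lra).
  assert (0 <= Q / (4 * (1 + growth))) by (apply Rdiv_le_0_compat; lra).
  lra.
Qed.

Lemma den_ge_half (b bm u v u' v' w : R) : 0 <= b <= bm -> 0 <= u -> 0 <= v ->
  Rabs (u' - u) + Rabs (v' - v) <= w -> w * bm <= / 2 -> / 2 <= 1 + b * (u' + v').
Proof.
  intros Hb Hu Hv Hw Hwb.
  assert (Hs : - w <= u' + v').
  { pose proof (Rle_abs (- (u' - u))). pose proof (Rle_abs (- (v' - v))).
    rewrite Rabs_Ropp in *. lra. }
  destruct (Rle_dec 0 (u' + v')).
  - assert (0 <= b * (u' + v')) by (apply Rmult_le_pos; lra). lra.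
  - nra.
Qed.

(* Near a solution of [Phi] the denominators stay above 1/2, which makes [Phi]
   Lipschitz on short time intervals even for unknowns of arbitrary sign. *)
Lemma Phi_diff_after F' F tau t w i X :
  admissible F -> (forall j, cont2_on (strip Dx) (F' j)) ->
  0 <= tau <= t -> 0 <= w -> w * beta_max P <= / 2 ->
  (forall Y s, Dx Y -> 0 <= s <= tau -> forall j, F' j Y s = F j Y s) ->
  (forall Y s, Dx Y -> tau <= s <= t -> gap F' F Y s <= w) ->
  Dx X -> Rabs (Phi F' i X t - Phi F i X t) <= 2 * alpha P * w * (t - tau).
Proof.
  intros HF HF' Htau Hw Hwb Heq Hgap HX. pose proof (alpha_ge0 P).
  assert (Hall : forall Y s, Dx Y -> 0 <= s <= t -> gap F' F Y s <= w).
  { intros Y s HY Hs. destruct (Rle_dec s tau); [|apply Hgap; auto; lra].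
    unfold gap. rewrite !Heq by (auto; lra). rewrite !Rminus_diag, Rabs_R0. lra. }
  set (D' := fun Y s => Dx Y /\ 0 <= s <= t).
  assert (Hden : forall Y s, D' Y s -> / 2 <= 1 + beta P Y * (F' true Y s + F' false Y s)).
  { intros Y s [HY Hs]. destruct HF as [_ Hn].
    pose proof (beta_bound P Y HY). pose proof (beta_min_gt0 P).
    apply (den_ge_half (beta P Y) (beta_max P) (F true Y s) (F false Y s) _ _ w); try lra.
    - apply Hn; auto; lra.
    - apply Hn; auto; lra.
    - exact (Hall Y s HY Hs). }
  assert (HD' : forall j, cont2_on D' (F' j))
    by (intro j; apply cont2_on_subset with (strip Dx); [intros Y s [HY Hs]; split|]; auto; lra).
  rewrite Phi_sub. apply duhamel_diff_after with D'; auto; try lra.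
  - apply kernel_cont with (/ 2); auto; [intros Y s []; auto | lra].
  - intros Y s HY Hs. split; auto.
  - apply kernel_cont_admissible; auto.
  - apply Rmult_le_pos; lra.
  - intros Y s HY Hs. unfold kernel. rewrite !Heq by (auto; lra). auto.
  - intros Y s HY Hs. eapply Rle_trans.
    + apply kernel_lipschitz with (d := / 2); auto; [lra | lra | apply Hden; split; auto; lra].
    + replace (alpha P / / 2) with (2 * alpha P) by (field; lra).
      apply Rmult_le_compat_l; [lra | apply Hall; auto; lra].
Qed.

Definition picard (n : nat) : bool -> R -> R -> R := Nat.iter n Phi (fun _ _ _ => 0).

Lemma picard_admissible n : admissible (picard n).
Proof.
  induction n; [|apply Phi_admissible; auto].
  split; [intro; apply cont2_on_const | intros; simpl; lra].
Qed.

Definition initial_gap : R :=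
  source_max (char P true) + source_max (char P false) + 2 * (alpha P / beta_min P).

Lemma initial_gap_ge0 : 0 <= initial_gap.
Proof.
  unfold initial_gap. pose proof (source_max_ge0 true). pose proof (source_max_ge0 false).
  pose proof kernel_max_ge0. lra.
Qed.

Lemma picard_gap n X t : Dx X -> 0 <= t ->
  gap (picard (S n)) (picard n) X t <= initial_gap * (/2)^n * exp (growth * t).
Proof.
  pose proof initial_gap_ge0.
  assert (Hg : 0 <= growth) by (unfold growth; pose proof (alpha_ge0 P); lra).
  revert X t; induction n; intros X t HX Ht.
  - pose proof (exp_ge_1 (growth * t) ltac:(apply Rmult_le_pos; auto)).
    destruct (picard_admissible 1) as [_ Hn].
    assert (Hi : forall i, Rabs (picard 1 i X t - picard 0 i X t) <=
        source_max (char P i) + alpha P / beta_min P).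
    { intro i. pose proof (Hn i X t HX Ht). pose proof (source_max_ge0 i).
      pose proof kernel_max_ge0. simpl (picard 0 i X t).
      rewrite Rminus_0_r, Rabs_right by lra.
      eapply Rle_trans; [apply (Phi_bound (picard 0)); auto; apply picard_admissible|].
      apply Rmax_lub; lra. }
    unfold gap. pose proof (Hi true). pose proof (Hi false). simpl pow. rewrite Rmult_1_r.
    apply Rle_trans with initial_gap; [unfold initial_gap; lra|].
    rewrite <- (Rmult_1_r initial_gap) at 1. apply Rmult_le_compat_l; lra.
  - eapply Rle_trans.
    + apply (Phi_gap_contract (picard (S n)) (picard n) (initial_gap * (/2)^n));
        auto; try apply picard_admissible.
      apply Rmult_le_pos; [lra | apply pow_le; lra].
    + right. simpl pow. ring.
Qed.

Definition sol (i : bool) (X t : R) : R := real (Lim_seq (fun n => picard n i X t)).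

Lemma picard_sol_error i X t : Dx X -> 0 <= t ->
  is_lim_seq (fun n => picard n i X t) (sol i X t) /\
  forall n, Rabs (picard n i X t - sol i X t) <= 2 * initial_gap * exp (growth * t) * (/2)^n.
Proof.
  intros HX Ht.
  destruct (geometric_Lim_seq (fun n => picard n i X t) (initial_gap * exp (growth * t)))
    as [Hl Hb].
  - intro n. eapply Rle_trans; [apply (Rabs_le_gap (picard (S n)) (picard n))|].
    eapply Rle_trans; [apply picard_gap; auto | right; ring].
  - split; [exact Hl|]. intro n. eapply Rle_trans; [apply Hb | right; ring].
Qed.

Lemma picard_sol_gap n Y s : Dx Y -> 0 <= s ->
  gap (picard n) sol Y s <= 4 * initial_gap * (/2)^n * exp (growth * s).
Proof.
  intros HY Hs. unfold gap.
  pose proof (proj2 (picard_sol_error true Y s HY Hs) n).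
  pose proof (proj2 (picard_sol_error false Y s HY Hs) n). lra.
Qed.

Lemma sol_admissible : admissible sol.
Proof.
  pose proof initial_gap_ge0.
  split.
  - intro i.
    apply (cont2_on_geometric_limit Dx (fun n => picard n i) (sol i) (2 * initial_gap) growth);
      [lra | unfold growth; pose proof (alpha_ge0 P); lra | intro n; apply picard_admissible|].
    intros n X t HX Ht. apply (picard_sol_error i X t HX Ht).
  - intros i X t HX Ht.
    pose proof (is_lim_seq_le (fun _ => 0) _ 0 _
      (fun n => proj2 (picard_admissible n) i X t HX Ht)
      (is_lim_seq_const 0) (proj1 (picard_sol_error i X t HX Ht))) as H0.
    exact H0.
Qed.

Lemma sol_fixed i X t : Dx X -> 0 <= t -> sol i X t = Phi sol i X t.
Proof.
  intros HX Ht. pose proof initial_gap_ge0.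
  set (Q := initial_gap * exp (growth * t)).
  assert (HQ : 0 <= Q) by (apply Rmult_le_pos; [lra | left; apply exp_pos]).
  apply Rminus_diag_uniq, (eq0_of_half_pow_bound _ (4 * Q)). intro n.
  assert (Hhalf : 0 <= (/2)^n) by (apply pow_le; lra).
  pose proof (proj2 (picard_sol_error i X t HX Ht) (S n)) as A1.
  change (picard (S n) i X t) with (Phi (picard n) i X t) in A1.
  assert (A2 : Rabs (Phi (picard n) i X t - Phi sol i X t)
      <= / 2 * (4 * initial_gap * (/2)^n * exp (growth * t))).
  { eapply Rle_trans; [apply Rabs_le_gap|].
    apply Phi_gap_contract; auto; [apply picard_admissible | apply sol_admissible|
      apply Rmult_le_pos; lra | apply picard_sol_gap]. }
  replace (sol i X t - Phi sol i X t) with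
    (- (Phi (picard n) i X t - sol i X t) + (Phi (picard n) i X t - Phi sol i X t)) by ring.
  eapply Rle_trans; [apply Rabs_triang|]. rewrite Rabs_Ropp.
  simpl pow in A1. fold Q in A1. unfold Q in *. nra.
Qed.

Lemma sol_bound i X t : Dx X -> 0 <= t ->
  0 <= sol i X t <= Rmax (source_max (char P i)) (alpha P / beta_min P).
Proof.
  intros HX Ht. split; [apply sol_admissible; auto|].
  rewrite sol_fixed by auto. apply Phi_bound; auto. apply sol_admissible.
Qed.

Lemma sol_periodic :
  (forall i X t, source (char P i) (X + 1) t = source (char P i) X t) ->
  (forall i X t, start (char P i) (X + 1) t = start (char P i) X t) ->
  (forall Y, beta P (Y + 1) = beta P Y) ->
  forall i X t, sol i (X + 1) t = sol i X t.
Proof.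
  intros Hsource Hstart Hbeta.
  assert (Hpicard : forall n i X t, picard n i (X + 1) t = picard n i X t).
  { induction n; intros i X t; [reflexivity|].
    change (Phi (picard n) i (X + 1) t = Phi (picard n) i X t).
    unfold Phi, duhamel, kernel. rewrite Hsource, Hstart. do 2 f_equal.
    apply functional_extensionality. intro s.
    replace (X + 1 + speed (char P i) * (s - t)) with
      (X + speed (char P i) * (s - t) + 1) by ring.
    rewrite Hbeta, !IHn. reflexivity. }
  intros i X t. unfold sol. now rewrite (Lim_seq_ext _ _ (fun n => Hpicard n i X t)).
Qed.

(** ** Uniqueness *)

Section Uniqueness.

Variable F' : bool -> R -> R -> R.
Hypothesis F'_cont : forall i, cont2_on (strip Dx) (F' i).
Hypothesis F'_fixed : forall i X t, 0 <= X <= 1 -> 0 <= t -> F' i X t = Phi F' i X t.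
(* Agreement is tracked for [X] in [[0, 1]] only; [gap_reduce] transfers it to
   the whole domain (trivially for (DBC), by periodicity for (PBC)). *)
Hypothesis gap_reduce : forall Y s, Dx Y -> 0 <= s ->
  exists Y', 0 <= Y' <= 1 /\ gap F' sol Y s = gap F' sol Y' s.

Definition agree (tau : R) : Prop :=
  forall X s, 0 <= X <= 1 -> 0 <= s <= tau -> gap F' sol X s = 0.

Lemma gap_cont : cont2_on (strip Dx) (gap F' sol).
Proof.
  unfold gap. apply cont2_on_plus; apply cont2_on_abs; apply cont2_on_minus;
    auto; apply sol_admissible.
Qed.

Lemma agree_on_dom tau : agree tau ->
  forall Y s, Dx Y -> 0 <= s <= tau -> forall j, F' j Y s = sol j Y s.
Proof.
  intros Hagree Y s HY Hs j. destruct (gap_reduce Y s HY ltac:(lra)) as [Y' [HY' E]].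
  rewrite (Hagree Y' s HY' Hs) in E.
  apply Rminus_diag_uniq, Rabs_eq_0.
  pose proof (Rabs_le_gap F' sol j Y s). pose proof (Rabs_pos (F' j Y s - sol j Y s)). lra.
Qed.

Lemma agree_0 : agree 0.
Proof.
  intros X s HX Hs. replace s with 0 by lra.
  assert (HXd : Dx X) by (apply dom_unit; auto).
  assert (Hsame : forall i, F' i X 0 = sol i X 0).
  { intro i. rewrite F'_fixed, sol_fixed by (auto; lra).
    assert (start (char P i) X 0 = 0)
      by (pose proof (start_bound (char P i) X 0 HXd (Rle_refl 0)); lra).
    unfold Phi, duhamel. rewrite H, !Defs_RInt_point. reflexivity. }
  unfold gap. rewrite !Hsame, !Rminus_diag, Rabs_R0. lra.
Qed.

Lemma agree_closed tau : 0 < tau -> (forall s, 0 <= s < tau -> agree s) -> agree tau.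
Proof.
  intros Htau Hbelow X s HX Hs.
  destruct (Rlt_le_dec s tau) as [Hlt | Hge]; [exact (Hbelow s ltac:(lra) X s HX ltac:(lra))|].
  replace s with tau by lra. pose proof (gap_ge0 F' sol X tau).
  apply NNPP. intro Hn. assert (Hpos : 0 < gap F' sol X tau) by lra.
  destruct (gap_cont X tau (conj (dom_unit P X HX) (Rlt_le _ _ Htau)) _ Hpos)
    as [d [Hd Hd']].
  set (s' := Rmax 0 (tau - d / 2)).
  assert (Hs' : 0 <= s' < tau) by (unfold s', Rmax; destruct Rle_dec; lra).
  assert (Hc : Rabs (gap F' sol X s' - gap F' sol X tau) < gap F' sol X tau).
  { apply Hd'; [split; [apply dom_unit; auto | lra] | rewrite Rminus_diag, Rabs_R0; lra|].
    unfold s', Rmax; destruct Rle_dec; unfold Rabs; destruct Rcase_abs; lra. }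
  rewrite (Hbelow s' Hs' X s' HX ltac:(lra)) in Hc.
  rewrite Rminus_0_l, Rabs_Ropp, Rabs_right in Hc; lra.
Qed.

Lemma beta_max_gt0 : 0 < beta_max P.
Proof.
  pose proof (beta_bound P 0 (dom_unit P 0 ltac:(lra))). pose proof (beta_min_gt0 P). lra.
Qed.

Lemma gap_halves tau d w : 0 <= tau -> agree tau -> 0 <= d -> 4 * alpha P * d <= / 2 ->
  0 <= w -> w * beta_max P <= / 2 ->
  (forall X s, 0 <= X <= 1 -> tau <= s <= tau + d -> gap F' sol X s <= w) ->
  forall X s, 0 <= X <= 1 -> tau <= s <= tau + d -> gap F' sol X s <= / 2 * w.
Proof.
  intros Htau Hagree Hd Hsmall Hw Hwb Hgap X s HX Hs. pose proof (alpha_ge0 P).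
  assert (Hdom : forall Y s', Dx Y -> tau <= s' <= s -> gap F' sol Y s' <= w).
  { intros Y s' HY Hs'. destruct (gap_reduce Y s' HY ltac:(lra)) as [Y' [HY' ->]].
    apply Hgap; auto; lra. }
  assert (Hi : forall i, Rabs (F' i X s - sol i X s) <= 2 * alpha P * w * (s - tau)).
  { intro i. rewrite F'_fixed, sol_fixed by (auto; try apply dom_unit; auto; lra).
    apply Phi_diff_after; auto; try lra; [apply sol_admissible | |apply dom_unit; auto].
    intros Y s' HY Hs' j. apply (agree_on_dom tau); auto. }
  unfold gap. pose proof (Hi true). pose proof (Hi false).
  assert (2 * alpha P * w * (s - tau) <= w * (2 * alpha P * d)); [|nra].
  replace (2 * alpha P * w * (s - tau)) with (w * (2 * alpha P * (s - tau))) by ring.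
  apply Rmult_le_compat_l; [lra|]. apply Rmult_le_compat_l; lra.
Qed.

Lemma gap_small_after tau eta : 0 <= tau -> agree tau -> 0 < eta ->
  exists d, 0 < d /\
    forall X, 0 <= X <= 1 -> forall s, tau <= s <= tau + d -> gap F' sol X s < eta.
Proof.
  intros Htau Hagree Heta.
  apply (local_to_uniform 0 1
    (fun X d => forall s, tau <= s <= tau + d -> gap F' sol X s < eta)); [lra| |].
  { intros x d d' Hq [H1 H2] s Hs. apply Hq. lra. }
  intros X0 HX0.
  destruct (gap_cont X0 tau (conj (dom_unit P X0 HX0) Htau) eta Heta) as [d0 [Hd0 Hd0']].
  exists (d0 / 2). split; [lra|]. intros y Hy Hyx s Hs.
  assert (Hw : Rabs (gap F' sol y s - gap F' sol X0 tau) < eta).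
  { apply Hd0'; [split; [apply dom_unit; auto | lra] | lra|].
    unfold Rabs; destruct Rcase_abs; lra. }
  rewrite (Hagree X0 tau HX0 ltac:(lra)), Rminus_0_r in Hw.
  pose proof (Rle_abs (gap F' sol y s)). lra.
Qed.

Lemma agree_step tau : 0 <= tau -> agree tau -> exists d, 0 < d /\ agree (tau + d).
Proof.
  intros Htau Hagree. pose proof (alpha_ge0 P). pose proof beta_max_gt0.
  set (eta := / (2 * beta_max P)).
  assert (Heta : 0 < eta) by (unfold eta; apply Rinv_0_lt_compat; lra).
  assert (Hetab : eta * beta_max P = / 2) by (unfold eta; field; lra).
  destruct (gap_small_after tau eta Htau Hagree Heta) as [d1 [Hd1 Hd1']].
  set (d := Rmin d1 (/ (8 * alpha P + 1))).
  assert (Hd : 0 < d) by (unfold d; apply Rmin_pos; auto; apply Rinv_0_lt_compat; lra).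
  assert (Hdd1 : d <= d1) by apply Rmin_l.
  assert (Hsmall : 4 * alpha P * d <= / 2).
  { apply Rle_trans with (4 * alpha P * / (8 * alpha P + 1));
      [apply Rmult_le_compat_l; [lra | apply Rmin_r]|].
    apply Rmult_le_reg_r with (8 * alpha P + 1); [lra|].
    rewrite Rmult_assoc, Rinv_l by lra. lra. }
  assert (Hclaim : forall n X s, 0 <= X <= 1 -> tau <= s <= tau + d ->
      gap F' sol X s <= eta * (/2)^n).
  { induction n; intros X s HX Hs.
    - rewrite pow_O, Rmult_1_r. left. apply Hd1'; auto. lra.
    - replace (eta * (/2)^(S n)) with (/ 2 * (eta * (/2)^n)) by (simpl; ring).
      pose proof (half_pow_le_1 n). assert (0 <= (/2)^n) by (apply pow_le; lra).
      apply (gap_halves tau d); auto; try lra; [apply Rmult_le_pos; lra|].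
      replace (eta * (/2)^n * beta_max P) with ((eta * beta_max P) * (/2)^n) by ring. nra. }
  exists d. split; auto. intros X s HX Hs.
  destruct (Rle_dec s tau); [apply Hagree; auto; lra|].
  apply (eq0_of_half_pow_bound _ eta). intro k.
  rewrite Rabs_right by (apply Rle_ge, gap_ge0). apply Hclaim; auto; lra.
Qed.

Lemma fixed_point_unique i X t : Dx X -> 0 <= t -> F' i X t = sol i X t.
Proof.
  intros HX Ht. apply (agree_on_dom t); auto; [|lra].
  apply real_induction; auto.
  - exact agree_0.
  - intros tau tau' H Htau X' s HX' Hs. apply H; auto; lra.
  - exact agree_closed.
  - exact agree_step.
Qed.

End Uniqueness.
End Fixed_point_map.

(** * The change of variables [x |-> X(x)] *)

Section Change_of_variables.

Variables (c : R -> R) (cl cu : R).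
Hypothesis c_cont : cont01 c.
Hypothesis cl_gt0 : 0 < cl.
Hypothesis c_bound : forall x, 0 <= x <= 1 -> cl <= c x <= cu.

Lemma cu_gt0 : 0 < cu.
Proof. destruct (c_bound 0); lra. Qed.

Lemma ex_RInt_inv_c a b : 0 <= a -> a <= b -> b <= 1 -> ex_RInt (fun y => / c y) a b.
Proof.
  intros Ha Hab Hb. apply ex_RInt_cont_within; auto. intros x Hx.
  apply cont_within_seq. intros u Hu Hl. destruct (c_bound x ltac:(lra)).
  apply (is_lim_seq_ext (fun n => 1 / c (u n))); [intro n; unfold Rdiv; ring|].
  replace (/ c x) with (1 / c x) by (unfold Rdiv; ring).
  apply is_lim_seq_div'; [apply is_lim_seq_const| |lra].
  apply (proj1 (cont_within_seq _ _ _) (c_cont x ltac:(lra))); auto.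
  intro n. specialize (Hu n). lra.
Qed.

Lemma RInt_inv_c_bound a b : 0 <= a -> a <= b -> b <= 1 ->
  (b - a) / cu <= RInt (fun y => / c y) a b <= (b - a) / cl.
Proof.
  intros Ha Hab Hb. pose proof cu_gt0. pose proof (ex_RInt_inv_c a b Ha Hab Hb).
  split.
  - replace ((b - a) / cu) with (RInt (fun _ => / cu) a b) by (rewrite RInt_const_R; reflexivity).
    apply RInt_le_R; auto; [apply ex_RInt_const|].
    intros x Hx. destruct (c_bound x ltac:(lra)). apply Rinv_le_contravar; lra.
  - replace ((b - a) / cl) with (RInt (fun _ => / cl) a b) by (rewrite RInt_const_R; reflexivity).
    apply RInt_le_R; auto; [apply ex_RInt_const|].
    intros x Hx. destruct (c_bound x ltac:(lra)). apply Rinv_le_contravar; lra.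
Qed.

Lemma Cc_eq : Cc c = / RInt (fun y => / c y) 0 1.
Proof. unfold Cc. rewrite Defs_RInt_RInt; auto. apply ex_RInt_inv_c; lra. Qed.

Lemma Cc_bound : cl <= Cc c <= cu.
Proof.
  pose proof cu_gt0. rewrite Cc_eq.
  destruct (RInt_inv_c_bound 0 1) as [H1 H2]; try lra. rewrite Rminus_0_r in H1, H2.
  assert (0 < RInt (fun y => / c y) 0 1)
    by (eapply Rlt_le_trans; [|exact H1]; apply Rdiv_lt_0_compat; lra).
  split.
  - replace cl with (/ (1 / cl)) by (field; lra). apply Rinv_le_contravar; auto.
  - replace cu with (/ (1 / cu)) by (field; lra).
    apply Rinv_le_contravar; auto. apply Rdiv_lt_0_compat; lra.
Qed.

Lemma Cc_gt0 : 0 < Cc c.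
Proof. pose proof Cc_bound. lra. Qed.

Lemma Xmap_diff x y : 0 <= x -> x <= y -> y <= 1 ->
  Cc c * (y - x) / cu <= Xmap c y - Xmap c x <= Cc c * (y - x) / cl.
Proof.
  intros Hx Hxy Hy. pose proof Cc_gt0. unfold Xmap.
  rewrite !Defs_RInt_RInt by (apply ex_RInt_inv_c; lra).
  rewrite <- (RInt_Chasles_R (fun y => / c y) 0 x y) by (apply ex_RInt_inv_c; lra).
  destruct (RInt_inv_c_bound x y) as [H1 H2]; auto.
  replace (Cc c * (RInt (fun y => / c y) 0 x + RInt (fun y => / c y) x y) -
    Cc c * RInt (fun y => / c y) 0 x) with (Cc c * RInt (fun y => / c y) x y) by ring.
  split; unfold Rdiv in *; rewrite Rmult_assoc; apply Rmult_le_compat_l; lra.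
Qed.

Lemma Xmap_0 : Xmap c 0 = 0.
Proof. unfold Xmap. rewrite Defs_RInt_point. ring. Qed.

Lemma Xmap_1 : Xmap c 1 = 1.
Proof.
  unfold Xmap. rewrite Defs_RInt_RInt by (apply ex_RInt_inv_c; lra). rewrite Cc_eq.
  destruct (RInt_inv_c_bound 0 1) as [H1 _]; try lra. pose proof cu_gt0.
  field. assert (0 < (1 - 0) / cu) by (apply Rdiv_lt_0_compat; lra). lra.
Qed.

Lemma Xmap_in x : 0 <= x <= 1 -> 0 <= Xmap c x <= 1.
Proof.
  intros Hx. pose proof Cc_gt0. pose proof cu_gt0.
  destruct (Xmap_diff 0 x) as [H1 _]; try lra. destruct (Xmap_diff x 1) as [H2 _]; try lra.
  rewrite Xmap_0 in H1. rewrite Xmap_1 in H2.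
  assert (0 <= Cc c * (x - 0) / cu) by (apply Rdiv_le_0_compat; [apply Rmult_le_pos|]; lra).
  assert (0 <= Cc c * (1 - x) / cu) by (apply Rdiv_le_0_compat; [apply Rmult_le_pos|]; lra).
  lra.
Qed.

Lemma Xmap_bilipschitz x y : 0 <= x <= 1 -> 0 <= y <= 1 ->
  Cc c * Rabs (x - y) / cu <= Rabs (Xmap c x - Xmap c y) <= Cc c * Rabs (x - y) / cl.
Proof.
  intros Hx Hy. pose proof Cc_gt0. pose proof cu_gt0.
  destruct (Rle_dec x y).
  - destruct (Xmap_diff x y) as [H1 H2]; try lra.
    rewrite Rabs_minus_sym, (Rabs_minus_sym (Xmap c x)), (Rabs_right (y - x)) by lra.
    assert (0 <= Cc c * (y - x) / cu) by (apply Rdiv_le_0_compat; [apply Rmult_le_pos|]; lra).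
    rewrite Rabs_right; lra.
  - destruct (Xmap_diff y x) as [H1 H2]; try lra.
    rewrite (Rabs_right (x - y)) by lra.
    assert (0 <= Cc c * (x - y) / cu) by (apply Rdiv_le_0_compat; [apply Rmult_le_pos|]; lra).
    rewrite Rabs_right; lra.
Qed.

Lemma Xmap_surj X : 0 <= X <= 1 -> exists x, 0 <= x <= 1 /\ Xmap c x = X.
Proof.
  intros HX. pose proof Cc_gt0.
  set (f := fun x => Xmap c (clamp 0 1 x)).
  assert (Hf : continuity f).
  { intros x0 eps He. exists (eps * cl / Cc c).
    split; [apply Rdiv_lt_0_compat; [apply Rmult_lt_0_compat|]; lra|].
    intros x [_ Hx]. simpl in *. unfold R_dist in *. unfold f.
    pose proof (clamp_in 0 1 x ltac:(lra)). pose proof (clamp_in 0 1 x0 ltac:(lra)).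
    eapply Rle_lt_trans; [apply Xmap_bilipschitz; auto|].
    apply Rle_lt_trans with (Cc c * Rabs (x - x0) / cl).
    - unfold Rdiv. apply Rmult_le_compat_r; [left; apply Rinv_0_lt_compat; lra|].
      apply Rmult_le_compat_l; [lra | apply clamp_lipschitz; lra].
    - apply Rmult_lt_reg_r with (cl / Cc c); [apply Rdiv_lt_0_compat; lra|].
      replace (Cc c * Rabs (x - x0) / cl * (cl / Cc c)) with (Rabs (x - x0))
        by (field; lra). lra. }
  assert (f0 : f 0 = 0) by (unfold f; rewrite clamp_id by lra; apply Xmap_0).
  assert (f1 : f 1 = 1) by (unfold f; rewrite clamp_id by lra; apply Xmap_1).
  destruct (IVT_gen f 0 1 X Hf) as [x [Hx Hfx]].
  { rewrite f0, f1, Rmin_left, Rmax_right; lra. }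
  rewrite Rmin_left, Rmax_right in Hx by lra.
  exists x. split; auto. unfold f in Hfx. rewrite clamp_id in Hfx; auto.
Qed.

Lemma Xinv_spec X : 0 <= X <= 1 -> 0 <= Xinv c X <= 1 /\ Xmap c (Xinv c X) = X.
Proof. intros HX. unfold Xinv. apply epsilon_spec. apply Xmap_surj; auto. Qed.

Lemma Xinv_Xmap x : 0 <= x <= 1 -> Xinv c (Xmap c x) = x.
Proof.
  intros Hx. destruct (Xinv_spec (Xmap c x) (Xmap_in x Hx)) as [Hin Heq].
  pose proof (Xmap_bilipschitz (Xinv c (Xmap c x)) x Hin Hx) as [Hlow _].
  rewrite Heq, Rminus_diag, Rabs_R0 in Hlow. pose proof Cc_gt0. pose proof cu_gt0.
  apply Rminus_diag_uniq, Rabs_eq_0.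
  pose proof (Rabs_pos (Xinv c (Xmap c x) - x)).
  set (A := Rabs (Xinv c (Xmap c x) - x)) in *.
  assert (A <= 0); [|lra].
  apply Rmult_le_reg_l with (Cc c / cu); [apply Rdiv_lt_0_compat; lra|].
  replace (Cc c / cu * A) with (Cc c * A / cu) by (field; lra). lra.
Qed.

Lemma Xinv_0 : Xinv c 0 = 0.
Proof. rewrite <- Xmap_0 at 1. apply Xinv_Xmap; lra. Qed.

Lemma Xinv_1 : Xinv c 1 = 1.
Proof. rewrite <- Xmap_1 at 1. apply Xinv_Xmap; lra. Qed.

Lemma cont_within_comp_Xinv (f : R -> R) X : cont01 f -> 0 <= X <= 1 ->
  cont_within (fun y => 0 <= y <= 1) (fun Y => f (Xinv c Y)) X.
Proof.
  intros Hf HX eps He. pose proof Cc_gt0. pose proof cu_gt0.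
  destruct (Xinv_spec X HX) as [HX' EX].
  destruct (Hf _ HX' eps He) as [d [Hd Hd']].
  exists (d * Cc c / cu). split; [apply Rdiv_lt_0_compat; [apply Rmult_lt_0_compat|]; lra|].
  intros Y HY HYX. destruct (Xinv_spec Y HY) as [HY' EY].
  apply Hd'; auto.
  pose proof (Xmap_bilipschitz (Xinv c Y) (Xinv c X) HY' HX') as [Hlow _].
  rewrite EY, EX in Hlow.
  apply Rmult_lt_reg_l with (Cc c / cu); [apply Rdiv_lt_0_compat; lra|].
  replace (Cc c / cu * Rabs (Xinv c Y - Xinv c X)) with
    (Cc c * Rabs (Xinv c Y - Xinv c X) / cu) by (field; lra).
  replace (Cc c / cu * d) with (d * Cc c / cu) by (field; lra). lra.
Qed.

Lemma betaf_bound Y : 0 <= Y <= 1 -> Cc c / cu <= betaf c Y <= Cc c / cl.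
Proof.
  intros HY. unfold betaf. destruct (Xinv_spec Y HY) as [H1 _].
  destruct (c_bound _ H1). pose proof Cc_gt0.
  unfold Rdiv. split; apply Rmult_le_compat_l; try lra; apply Rinv_le_contravar; lra.
Qed.

Lemma betaf_cont Y : 0 <= Y <= 1 -> cont_within (fun y => 0 <= y <= 1) (betaf c) Y.
Proof.
  intros HY. apply cont_within_seq. intros u Hu Hl. unfold betaf.
  destruct (Xinv_spec Y HY) as [H1 _]. destruct (c_bound _ H1).
  apply is_lim_seq_div'; [apply is_lim_seq_const| |lra].
  apply (proj1 (cont_within_seq _ _ _) (cont_within_comp_Xinv c Y c_cont HY)); auto.
Qed.

Lemma U0f_cont u0 Y : cont01 u0 -> 0 <= Y <= 1 ->
  cont_within (fun y => 0 <= y <= 1) (U0f c u0) Y.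
Proof.
  intros Hu HY. apply cont_within_seq. intros u Hun Hl. unfold U0f.
  pose proof Cc_gt0.
  apply is_lim_seq_div'; [|apply is_lim_seq_const | lra].
  apply is_lim_seq_mult';
    [apply (proj1 (cont_within_seq _ _ _) (cont_within_comp_Xinv c Y c_cont HY)) |
     apply (proj1 (cont_within_seq _ _ _) (cont_within_comp_Xinv u0 Y Hu HY))]; auto.
Qed.

Lemma U0f_bound u0 M Y : (forall x, 0 <= x <= 1 -> 0 <= u0 x <= M) -> 0 <= Y <= 1 ->
  0 <= U0f c u0 Y <= cu * M / Cc c.
Proof.
  intros Hu HY. unfold U0f. destruct (Xinv_spec Y HY) as [H1 _].
  destruct (c_bound _ H1). destruct (Hu _ H1). pose proof Cc_gt0.
  split.
  - apply Rdiv_le_0_compat; [apply Rmult_le_pos|]; lra.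
  - unfold Rdiv. apply Rmult_le_compat_r; [left; apply Rinv_0_lt_compat; lra|].
    apply Rmult_le_compat; lra.
Qed.

End Change_of_variables.

(** * Data of the two boundary value problems *)

Lemma Int_part_char (y : R) (z : Z) : IZR z <= y < IZR z + 1 -> Int_part y = z.
Proof.
  intros H. unfold Int_part. assert (E : (z + 1)%Z = up y).
  { apply tech_up; rewrite plus_IZR; simpl; lra. }
  rewrite <- E. ring.
Qed.

Lemma frac_bound y : 0 <= frac y < 1.
Proof. unfold frac. destruct (base_Int_part y). lra. Qed.

Lemma frac_char y z : IZR z <= y < IZR z + 1 -> frac y = y - IZR z.
Proof. intros H. unfold frac. rewrite (Int_part_char y z H). auto. Qed.

Lemma frac_plus1 y : frac (y + 1) = frac y.
Proof.
  unfold frac. destruct (base_Int_part y).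
  rewrite (Int_part_char (y + 1) (Int_part y + 1)); rewrite plus_IZR; simpl; [ring | lra].
Qed.

Lemma periodic_frac (f : R -> R) : (forall X, f (X + 1) = f X) -> forall Y, f (frac Y) = f Y.
Proof.
  intros H Y.
  assert (Hn : forall n X, f (X + INR n) = f X).
  { induction n; intro X; [simpl; rewrite Rplus_0_r; auto|].
    rewrite S_INR. replace (X + (INR n + 1)) with ((X + INR n) + 1) by ring.
    rewrite H. auto. }
  unfold frac. destruct (Z.le_gt_cases 0 (Int_part Y)) as [Hz | Hz].
  - destruct (IZN _ Hz) as [m Hm]. rewrite Hm, <- INR_IZR_INZ.
    rewrite <- (Hn m (Y - INR m)). f_equal. ring.
  - destruct (IZN (- Int_part Y) ltac:(lia)) as [m Hm].
    replace (Y - IZR (Int_part Y)) with (Y + INR m); [apply Hn|].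
    rewrite INR_IZR_INZ, <- Hm, opp_IZR. ring.
Qed.

Lemma cont_frac (g : R -> R) :
  (forall y, 0 <= y <= 1 -> cont_within (fun z => 0 <= z <= 1) g y) -> g 0 = g 1 ->
  forall y, cont_within (fun _ => True) (fun y => g (frac y)) y.
Proof.
  intros Hg H01 y eps He.
  pose proof (frac_bound y) as Hf. set (n := Int_part y).
  assert (Hn : IZR n <= y < IZR n + 1) by (unfold n; destruct (base_Int_part y); lra).
  assert (Hfy : frac y = y - IZR n) by reflexivity.
  destruct (Rle_lt_or_eq_dec 0 (frac y) (proj1 Hf)) as [Hpos | Hzero].
  - destruct (Hg (frac y) ltac:(lra) eps He) as [d [Hd Hd']].
    exists (Rmin d (Rmin (frac y) (1 - frac y))).
    split; [apply Rmin_pos; auto; apply Rmin_pos; lra|].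
    intros y' _ Hy'. pose proof (Rmin_l d (Rmin (frac y) (1 - frac y))).
    pose proof (Rmin_r d (Rmin (frac y) (1 - frac y))).
    pose proof (Rmin_l (frac y) (1 - frac y)). pose proof (Rmin_r (frac y) (1 - frac y)).
    assert (Hr : IZR n <= y' < IZR n + 1) by (unfold Rabs in *; destruct Rcase_abs; lra).
    rewrite (frac_char y' n Hr). rewrite Hfy in *. apply Hd'; [lra|].
    replace (y' - IZR n - (y - IZR n)) with (y' - y) by ring. lra.
  - destruct (Hg 0 ltac:(lra) eps He) as [d0 [Hd0 Hd0']].
    destruct (Hg 1 ltac:(lra) eps He) as [d1 [Hd1 Hd1']].
    exists (Rmin (Rmin d0 d1) 1). split; [apply Rmin_pos; [apply Rmin_pos|]; lra|].
    intros y' _ Hy'.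
    pose proof (Rmin_l (Rmin d0 d1) 1). pose proof (Rmin_r (Rmin d0 d1) 1).
    pose proof (Rmin_l d0 d1). pose proof (Rmin_r d0 d1).
    rewrite <- Hzero. assert (Hyn : y = IZR n) by lra.
    destruct (Rle_dec y y') as [Hle | Hlt].
    + assert (Hr : IZR n <= y' < IZR n + 1) by (unfold Rabs in *; destruct Rcase_abs; lra).
      rewrite (frac_char y' n Hr). apply Hd0'; [lra|].
      rewrite Rminus_0_r. rewrite Hyn in Hy'. lra.
    + assert (Hr : IZR (n - 1) <= y' < IZR (n - 1) + 1)
        by (rewrite minus_IZR; simpl; unfold Rabs in *; destruct Rcase_abs; lra).
      rewrite (frac_char y' (n - 1) Hr), H01, minus_IZR. simpl.
      apply Hd1'; [rewrite minus_IZR in Hr; simpl in Hr; lra|].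
      replace (y' - (IZR n - 1) - 1) with (y' - y) by lra. lra.
Qed.

Lemma cont_within_mul_Heav (g : R -> R) :
  (forall y, 0 <= y <= 1 -> cont_within (fun z => 0 <= z <= 1) g y) -> g 0 = 0 ->
  forall y0, y0 <= 1 -> cont_within (fun y => y <= 1) (fun y => g y * Heav y) y0.
Proof.
  intros Hg H0 y0 Hy0 eps He. unfold Heav.
  destruct (Rlt_le_dec y0 0) as [Hneg | Hnn].
  - exists (- y0). split; [lra|]. intros y Hy Hyy.
    destruct (Rle_dec 0 y0); [lra|]. destruct (Rle_dec 0 y).
    + unfold Rabs in Hyy; destruct Rcase_abs in Hyy; lra.
    + rewrite !Rmult_0_r, Rminus_diag, Rabs_R0; auto.
  - destruct (Hg y0 ltac:(lra) eps He) as [d [Hd Hd']].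
    destruct (Rle_lt_or_eq_dec 0 y0 Hnn) as [Hpos | <-].
    + exists (Rmin d y0). split; [apply Rmin_pos; lra|]. intros y Hy Hyy.
      pose proof (Rmin_l d y0). pose proof (Rmin_r d y0).
      assert (0 < y) by (unfold Rabs in Hyy; destruct Rcase_abs in Hyy; lra).
      destruct (Rle_dec 0 y); [|lra]. destruct (Rle_dec 0 y0); [|lra].
      rewrite !Rmult_1_r. apply Hd'; [lra | lra].
    + exists d. split; auto. intros y Hy Hyy.
      destruct (Rle_dec 0 0); [|lra]. rewrite H0, Rmult_0_l.
      destruct (Rle_dec 0 y).
      * rewrite Rmult_1_r, <- H0. apply Hd'; [lra | auto].
      * rewrite Rmult_0_r, Rminus_diag, Rabs_R0; auto.
Qed.

Lemma cont_within_reflect (f : R -> R) :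
  (forall y, 0 <= y <= 1 -> cont_within (fun z => 0 <= z <= 1) f y) ->
  forall y, 0 <= y <= 1 -> cont_within (fun z => 0 <= z <= 1) (fun z => f (1 - z)) y.
Proof.
  intros Hf y Hy eps He. destruct (Hf (1 - y) ltac:(lra) eps He) as [d [Hd Hd']].
  exists d. split; auto. intros z Hz Hzz. apply Hd'; [lra|].
  replace (1 - z - (1 - y)) with (- (z - y)) by ring. rewrite Rabs_Ropp; auto.
Qed.

Lemma is_max01_exists (f : R -> R) : cont01 f -> exists M, is_max01 f M.
Proof.
  intros Hf.
  destruct (continuity_ab_maj (fun x => f (clamp 0 1 x)) 0 1) as [Mx [HM HMx]]; [lra| |].
  { intros x _ eps He.
    destruct (Hf (clamp 0 1 x) (clamp_in 0 1 x ltac:(lra)) eps He) as [d [Hd Hd']].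
    exists d. split; auto. intros y [_ Hy]. simpl in *. unfold R_dist in *.
    apply Hd'; [apply clamp_in; lra|].
    eapply Rle_lt_trans; [apply clamp_lipschitz; lra | auto]. }
  exists (f (clamp 0 1 Mx)). split.
  - intros x Hx. specialize (HM x Hx). rewrite clamp_id in HM; auto.
  - exists Mx. split; auto. rewrite clamp_id; auto.
Qed.

Lemma is_max01_unique f M M' : is_max01 f M -> is_max01 f M' -> M = M'.
Proof.
  intros [H1 [x [Hx <-]]] [H1' [x' [Hx' <-]]].
  pose proof (H1 x' Hx'). pose proof (H1' x Hx). lra.
Qed.

Lemma is_max01_bound f M : is_max01 f M -> (forall x, 0 <= x <= 1 -> 0 <= f x) ->
  forall x, 0 <= x <= 1 -> 0 <= f x <= M.
Proof. intros [H1 _] Hn x Hx. auto. Qed.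

Definition unit_dom (X : R) : Prop := 0 <= X <= 1.

(* [rho = true]: enters at [X = 0] moving right; [rho = false]: enters at
   [X = 1] moving left.  [inflow_pos] is the distance travelled since entry. *)
Definition inflow_pos (rho : bool) (X : R) : R := if rho then X else 1 - X.
Definition inflow_speed (rho : bool) (C : R) : R := if rho then C else - C.

Section Inflow.

Variables (C : R) (rho : bool) (g : R -> R) (M : R).
Hypothesis C_gt0 : 0 < C.
Hypothesis g_cont : forall y, 0 <= y <= 1 -> cont_within (fun z => 0 <= z <= 1) g y.
Hypothesis g_0 : g 0 = 0.
Hypothesis g_bound : forall y, 0 <= y <= 1 -> 0 <= g y <= M.

Definition inflow_source (X t : R) : R :=
  g (inflow_pos rho X - C * t) * Heav (inflow_pos rho X - C * t) * exp (- t).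
Definition inflow_start (X t : R) : R := Rmax 0 (t - inflow_pos rho X / C).

Lemma inflow_pos_unit X : unit_dom X -> 0 <= inflow_pos rho X <= 1.
Proof. unfold unit_dom, inflow_pos; destruct rho; lra. Qed.

Lemma inflow_source_cont : cont2_on (strip unit_dom) inflow_source.
Proof.
  apply cont2_on_seq. intros X t [HX Ht] x s Hn Hx Hs. unfold inflow_source.
  assert (Hpos : forall Y s, strip unit_dom Y s -> inflow_pos rho Y - C * s <= 1).
  { intros Y s' [HY Hs']. pose proof (inflow_pos_unit Y HY). nra. }
  apply is_lim_seq_mult'.
  - apply (proj1 (cont_within_seq _ _ _)
      (cont_within_mul_Heav g g_cont g_0 _ (Hpos X t (conj HX Ht)))
      (fun n => inflow_pos rho (x n) - C * s n)); [intro n; apply Hpos, Hn|].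
    apply is_lim_seq_minus'; [|apply is_lim_seq_scal_l with (lu := Finite t); auto].
    unfold inflow_pos; destruct rho; auto.
    apply is_lim_seq_minus'; [apply is_lim_seq_const | auto].
  - apply (is_lim_seq_continuous (fun x => exp (- x))); [reg | auto].
Qed.

Lemma inflow_source_bound X t : unit_dom X -> 0 <= t ->
  0 <= inflow_source X t <= M * exp (- t).
Proof.
  intros HX Ht. pose proof (inflow_pos_unit X HX). pose proof (exp_pos (- t)).
  pose proof (g_bound 0 ltac:(lra)).
  unfold inflow_source, Heav. destruct (Rle_dec 0 (inflow_pos rho X - C * t)).
  - destruct (g_bound (inflow_pos rho X - C * t)); [nra|]. rewrite Rmult_1_r.
    split; [apply Rmult_le_pos | apply Rmult_le_compat_r]; lra.
  - rewrite Rmult_0_r, Rmult_0_l. split; [lra | apply Rmult_le_pos; lra].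
Qed.

Lemma inflow_start_cont : cont2_on (strip unit_dom) inflow_start.
Proof.
  apply cont2_on_Rmax0. unfold inflow_pos.
  destruct rho; [apply (cont2_on_ext _ _ _ (cont2_on_affine _ 1 (- / C) 0)) |
    apply (cont2_on_ext _ _ _ (cont2_on_affine _ 1 (/ C) (- / C)))];
  intros; field; lra.
Qed.

Lemma inflow_start_bound X t : unit_dom X -> 0 <= t -> 0 <= inflow_start X t <= t.
Proof.
  intros HX Ht. pose proof (inflow_pos_unit X HX). unfold inflow_start.
  assert (0 <= inflow_pos rho X / C) by (apply Rdiv_le_0_compat; lra).
  unfold Rmax; destruct Rle_dec; lra.
Qed.

Lemma inflow_path X t s : unit_dom X -> 0 <= t -> inflow_start X t <= s <= t ->
  unit_dom (X + inflow_speed rho C * (s - t)).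
Proof.
  intros HX Ht Hs. pose proof (inflow_pos_unit X HX).
  assert (Hlow : - inflow_pos rho X <= C * (s - t)).
  { assert (t - inflow_pos rho X / C <= s) by (eapply Rle_trans; [apply Rmax_r | apply Hs]).
    apply Rmult_le_compat_l with (r := C) in H0; [|lra].
    replace (C * (t - inflow_pos rho X / C)) with (C * t - inflow_pos rho X) in H0
      by (field; lra). lra. }
  assert (Hup : C * (s - t) <= 0) by nra.
  revert Hlow. unfold unit_dom, inflow_pos, inflow_speed in *. destruct rho; intros; lra.
Qed.

Definition inflow_char : characteristic unit_dom :=
  {| speed := inflow_speed rho C; source := inflow_source; start := inflow_start;
     source_max := M; source_cont := inflow_source_cont;
     source_bound := inflow_source_bound; start_cont := inflow_start_cont;
     start_bound := inflow_start_bound; path_in := inflow_path |}.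

End Inflow.

Section Periodic.

Variables (v : R) (g : R -> R) (M : R).
Hypothesis g_cont : forall y, 0 <= y <= 1 -> cont_within (fun z => 0 <= z <= 1) g y.
Hypothesis g_glue : g 0 = g 1.
Hypothesis g_bound : forall y, 0 <= y <= 1 -> 0 <= g y <= M.

Definition periodic_source (X t : R) : R := g (frac (X - v * t)) * exp (- t).

Lemma periodic_source_cont : cont2_on (strip (fun _ => True)) periodic_source.
Proof.
  apply cont2_on_seq. intros X t _ x s _ Hx Hs. unfold periodic_source.
  apply is_lim_seq_mult'.
  - apply (proj1 (cont_within_seq _ _ _) (cont_frac g g_cont g_glue (X - v * t))
      (fun n => x n - v * s n)); [intro n; exact I|].
    apply is_lim_seq_minus'; [auto | apply is_lim_seq_scal_l with (lu := Finite t); auto].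
  - apply (is_lim_seq_continuous (fun x => exp (- x))); [reg | auto].
Qed.

Lemma periodic_source_bound X t : True -> 0 <= t ->
  0 <= periodic_source X t <= M * exp (- t).
Proof.
  intros _ Ht. pose proof (exp_pos (- t)). pose proof (frac_bound (X - v * t)).
  destruct (g_bound (frac (X - v * t))); [lra|]. unfold periodic_source.
  split; [apply Rmult_le_pos | apply Rmult_le_compat_r]; lra.
Qed.

Lemma periodic_source_periodic X t : periodic_source (X + 1) t = periodic_source X t.
Proof.
  unfold periodic_source. now replace (X + 1 - v * t) with (X - v * t + 1) by ring;
    rewrite frac_plus1.
Qed.

Definition periodic_char : characteristic (fun _ => True) :=
  {| speed := v; source := periodic_source; start := fun _ _ => 0;
     source_max := M; source_cont := periodic_source_cont;
     source_bound := periodic_source_bound;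
     start_cont := cont2_on_const _ 0;
     start_bound := fun X t _ Ht => conj (Rle_refl 0) Ht;
     path_in := fun _ _ _ _ _ _ => I |}.

End Periodic.

Definition pack (U V : R -> R -> R) (i : bool) : R -> R -> R := if i then U else V.

Lemma pair_sol P : pack (sol P true) (sol P false) = sol P.
Proof. apply functional_extensionality. intros []; reflexivity. Qed.

Section Well_posedness.

Variables (al : R) (c u0 v0 : R -> R) (cl cu Mu Mv : R).
Hypothesis al_ge0 : 0 <= al.
Hypothesis u0_cont : cont01 u0.
Hypothesis v0_cont : cont01 v0.
Hypothesis c_cont : cont01 c.
Hypothesis data_ge0 : forall x, 0 <= x <= 1 -> 0 <= u0 x /\ 0 <= v0 x.
Hypothesis cl_gt0 : 0 < cl.
Hypothesis c_bound : forall x, 0 <= x <= 1 -> cl <= c x <= cu.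
Hypothesis Mu_max : is_max01 u0 Mu.
Hypothesis Mv_max : is_max01 v0 Mv.

Let C_gt0 : 0 < Cc c := Cc_gt0 c cl cu c_cont cl_gt0 c_bound.

Lemma Cc_div_cu_gt0 : 0 < Cc c / cu.
Proof. apply Rdiv_lt_0_compat; [exact C_gt0 | exact (cu_gt0 c cl cu cl_gt0 c_bound)]. Qed.

Lemma U0f_u0_bound Y : 0 <= Y <= 1 -> 0 <= U0f c u0 Y <= cu * Mu / Cc c.
Proof.
  apply U0f_bound with cl; auto.
  apply is_max01_bound; auto. intros x Hx. apply data_ge0; auto.
Qed.

Lemma U0f_v0_bound Y : 0 <= Y <= 1 -> 0 <= U0f c v0 Y <= cu * Mv / Cc c.
Proof.
  apply U0f_bound with cl; auto.
  apply is_max01_bound; auto. intros x Hx. apply data_ge0; auto.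
Qed.

Lemma ufrom_bound W M x : 0 <= M -> 0 <= x <= 1 ->
  0 <= W <= Rmax (cu * M / Cc c) (al / (Cc c / cu)) ->
  0 <= Cc c / c x * W <= cu / cl * Rmax M al.
Proof.
  intros HM Hx HW. pose proof C_gt0. pose proof (cu_gt0 c cl cu cl_gt0 c_bound).
  destruct (c_bound x Hx).
  replace (Rmax (cu * M / Cc c) (al / (Cc c / cu))) with (cu / Cc c * Rmax M al) in HW
    by (rewrite <- RmaxRmult by (apply Rdiv_le_0_compat; lra); f_equal; field; lra).
  assert (0 <= Rmax M al) by (eapply Rle_trans; [exact HM | apply Rmax_l]).
  assert (Hcx : 0 < Cc c / c x) by (apply Rdiv_lt_0_compat; lra).
  split; [apply Rmult_le_pos; lra|].
  apply Rle_trans with (Cc c / c x * (cu / Cc c * Rmax M al));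
    [apply Rmult_le_compat_l; lra|].
  replace (Cc c / c x * (cu / Cc c * Rmax M al)) with (cu / c x * Rmax M al) by (field; lra).
  apply Rmult_le_compat_r; auto. unfold Rdiv. apply Rmult_le_compat_l; [lra|].
  apply Rinv_le_contravar; lra.
Qed.

Lemma sol_bounds_of (U V : R -> R -> R) :
  (forall X t, 0 <= X <= 1 -> 0 <= t ->
     0 <= U X t <= Rmax (cu * Mu / Cc c) (al / (Cc c / cu)) /\
     0 <= V X t <= Rmax (cu * Mv / Cc c) (al / (Cc c / cu))) ->
  sol_bounds al c u0 v0 cl cu U V.
Proof.
  intros HUV Mu' Mv' HMu' HMv' x t Hx Ht.
  rewrite (is_max01_unique u0 Mu' Mu), (is_max01_unique v0 Mv' Mv) by auto.
  destruct (HUV (Xmap c x) t (Xmap_in c cl cu c_cont cl_gt0 c_bound x Hx) Ht).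
  destruct Mu_max as [_ [xu [Hxu <-]]]. destruct Mv_max as [_ [xv [Hxv <-]]].
  unfold ufrom. split; apply ufrom_bound; auto; apply data_ge0; auto.
Qed.

Section DBC.

Hypothesis u0_0 : u0 0 = 0.
Hypothesis v0_1 : v0 1 = 0.

Lemma U0f_u0_0 : U0f c u0 0 = 0.
Proof. unfold U0f. rewrite (Xinv_0 c cl cu), u0_0 by auto. unfold Rdiv. ring. Qed.

Lemma U0f_v0_reflected_0 : U0f c v0 (1 - 0) = 0.
Proof.
  rewrite Rminus_0_r. unfold U0f. rewrite (Xinv_1 c cl cu), v0_1 by auto.
  unfold Rdiv. ring.
Qed.

Definition DBC_char (i : bool) : characteristic unit_dom :=
  if i then
    inflow_char (Cc c) true (U0f c u0) (cu * Mu / Cc c) C_gt0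
      (fun Y HY => U0f_cont c cl cu c_cont cl_gt0 c_bound u0 Y u0_cont HY)
      U0f_u0_0 U0f_u0_bound
  else
    inflow_char (Cc c) false (fun y => U0f c v0 (1 - y)) (cu * Mv / Cc c) C_gt0
      (cont_within_reflect (U0f c v0)
         (fun Y HY => U0f_cont c cl cu c_cont cl_gt0 c_bound v0 Y v0_cont HY))
      U0f_v0_reflected_0 (fun y Hy => U0f_v0_bound (1 - y) ltac:(lra)).

Definition DBC_problem : problem :=
  {| dom := unit_dom; alpha := al; beta := betaf c; beta_min := Cc c / cu;
     beta_max := Cc c / cl; char := DBC_char; alpha_ge0 := al_ge0;
     beta_min_gt0 := Cc_div_cu_gt0;
     beta_bound := betaf_bound c cl cu c_cont cl_gt0 c_bound;
     beta_cont := betaf_cont c cl cu c_cont cl_gt0 c_bound;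
     dom_unit := fun Y HY => HY |}.

Lemma DBC_mild_iff U V : mild_DBC al c u0 v0 U V <->
  (forall i, cont2_on (strip unit_dom) (pack U V i)) /\
  (forall i X t, 0 <= X <= 1 -> 0 <= t -> pack U V i X t = Phi DBC_problem (pack U V) i X t).
Proof.
  assert (HV : forall X t, Phi DBC_problem (pack U V) false X t =
    U0f c v0 (X + Cc c * t) * Heav (1 - X - Cc c * t) * exp (- t)
    + Defs.RInt (fun s => exp (s - t) *
        (al * U (X - Cc c * (s - t)) s /
          (1 + betaf c (X - Cc c * (s - t))
               * (U (X - Cc c * (s - t)) s + V (X - Cc c * (s - t)) s))))
        (Rmax 0 (t - (1 - X) / Cc c)) t).
  { intros X t. unfold Phi, duhamel, kernel. simpl. f_equal.
    - unfold inflow_source. simpl. do 3 f_equal. ring.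
    - f_equal. apply functional_extensionality. intro s.
      now replace (X + - Cc c * (s - t)) with (X - Cc c * (s - t)) by ring. }
  unfold mild_DBC. split.
  - intros [HU [HV' Heq]]. split; [intros []; auto|].
    intros [] X t HX Ht; destruct (Heq X t HX Ht) as [EU EV]; [exact EU|].
    rewrite HV. exact EV.
  - intros [Hc Heq]. split; [exact (Hc true)|]. split; [exact (Hc false)|].
    intros X t HX Ht. split; [exact (Heq true X t HX Ht)|].
    transitivity (Phi DBC_problem (pack U V) false X t); [exact (Heq false X t HX Ht)|].
    apply HV.
Qed.

Theorem DBC_well_posed : exists U V : R -> R -> R,
  mild_DBC al c u0 v0 U V /\
  (forall U' V', mild_DBC al c u0 v0 U' V' ->
     forall X t, 0 <= X <= 1 -> 0 <= t -> U' X t = U X t /\ V' X t = V X t) /\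
  sol_bounds al c u0 v0 cl cu U V.
Proof.
  set (P := DBC_problem).
  exists (sol P true), (sol P false). split; [|split].
  - apply DBC_mild_iff. rewrite pair_sol. split; [apply (proj1 (sol_admissible P))|].
    intros i X t HX Ht. apply sol_fixed; auto.
  - intros U' V' Hmild X t HX Ht. apply DBC_mild_iff in Hmild as [Hc Heq].
    assert (Huniq : forall i, pack U' V' i X t = sol P i X t).
    { intro i. apply (fixed_point_unique P (pack U' V') Hc Heq); auto.
      intros Y s HY Hs. exists Y. auto. }
    exact (conj (Huniq true) (Huniq false)).
  - apply sol_bounds_of. intros X t HX Ht.
    split; [apply (sol_bound P true) | apply (sol_bound P false)]; auto.
Qed.

End DBC.

Section PBC.

Hypothesis u0_glue : u0 0 = u0 1.
Hypothesis v0_glue : v0 0 = v0 1.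
Hypothesis c_glue : c 0 = c 1.

Lemma U0f_glue w0 : w0 0 = w0 1 -> U0f c w0 0 = U0f c w0 1.
Proof.
  intros Hw. unfold U0f. rewrite (Xinv_0 c cl cu), (Xinv_1 c cl cu), Hw, c_glue; auto.
Qed.

Definition PBC_char (i : bool) : characteristic (fun _ => True) :=
  if i then
    periodic_char (Cc c) (U0f c u0) (cu * Mu / Cc c)
      (fun Y HY => U0f_cont c cl cu c_cont cl_gt0 c_bound u0 Y u0_cont HY)
      (U0f_glue u0 u0_glue) U0f_u0_bound
  else
    periodic_char (- Cc c) (U0f c v0) (cu * Mv / Cc c)
      (fun Y HY => U0f_cont c cl cu c_cont cl_gt0 c_bound v0 Y v0_cont HY)
      (U0f_glue v0 v0_glue) U0f_v0_bound.

Lemma betaf_frac_bound Y : True -> Cc c / cu <= betaf c (frac Y) <= Cc c / cl.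
Proof.
  intros _. pose proof (frac_bound Y). apply (betaf_bound c cl cu); auto. lra.
Qed.

Lemma betaf_frac_cont Y : True -> cont_within (fun _ => True) (fun Y => betaf c (frac Y)) Y.
Proof.
  intros _. apply cont_frac; [apply (betaf_cont c cl cu); auto|].
  unfold betaf. rewrite (Xinv_0 c cl cu), (Xinv_1 c cl cu), c_glue; auto.
Qed.

Definition PBC_problem : problem :=
  {| dom := fun _ => True; alpha := al; beta := fun Y => betaf c (frac Y);
     beta_min := Cc c / cu; beta_max := Cc c / cl; char := PBC_char;
     alpha_ge0 := al_ge0; beta_min_gt0 := Cc_div_cu_gt0;
     beta_bound := betaf_frac_bound; beta_cont := betaf_frac_cont;
     dom_unit := fun _ _ => I |}.

Lemma PBC_mild_iff U V : mild_PBC al c u0 v0 U V <->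
  (forall i, cont2_on (strip (fun _ => True)) (pack U V i)) /\
  (forall i X t, 0 <= t -> pack U V i (X + 1) t = pack U V i X t) /\
  (forall i X t, 0 <= X <= 1 -> 0 <= t -> pack U V i X t = Phi PBC_problem (pack U V) i X t).
Proof.
  assert (Hstrip : forall X t, strip (fun _ => True) X t <-> 0 <= t)
    by (intros; unfold strip; tauto).
  assert (HV : forall X t, Phi PBC_problem (pack U V) false X t =
    U0f c v0 (frac (X + Cc c * t)) * exp (- t)
    + Defs.RInt (fun s => exp (s - t) *
        (al * U (X - Cc c * (s - t)) s /
          (1 + betaf c (frac (X - Cc c * (s - t)))
               * (U (X - Cc c * (s - t)) s + V (X - Cc c * (s - t)) s)))) 0 t).
  { intros X t. unfold Phi, duhamel, kernel. simpl. f_equal.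
    - unfold periodic_source. do 3 f_equal. ring.
    - f_equal. apply functional_extensionality. intro s.
      now replace (X + - Cc c * (s - t)) with (X - Cc c * (s - t)) by ring. }
  unfold mild_PBC. split.
  - intros [HU [HV' [Hper Heq]]]. split; [|split].
    + intros []; apply (cont2_on_subset (fun _ t => 0 <= t)); auto;
        intros X t; apply Hstrip.
    + intros [] X t Ht; apply (Hper X t Ht).
    + intros [] X t HX Ht; destruct (Heq X t HX Ht) as [EU EV]; [exact EU|].
      rewrite HV. exact EV.
  - intros [Hc [Hper Heq]].
    split; [apply (cont2_on_subset _ _ _ (fun X t => proj2 (Hstrip X t)) (Hc true))|].
    split; [apply (cont2_on_subset _ _ _ (fun X t => proj2 (Hstrip X t)) (Hc false))|].
    split; [intros X t Ht; exact (conj (Hper true X t Ht) (Hper false X t Ht))|].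
    intros X t HX Ht. split; [exact (Heq true X t HX Ht)|].
    transitivity (Phi PBC_problem (pack U V) false X t); [exact (Heq false X t HX Ht)|].
    apply HV.
Qed.

Lemma PBC_sol_periodic i X t : sol PBC_problem i (X + 1) t = sol PBC_problem i X t.
Proof.
  apply sol_periodic; [| now intros [] | intro Y; simpl; now rewrite frac_plus1].
  intros []; apply periodic_source_periodic.
Qed.

Theorem PBC_well_posed : exists U V : R -> R -> R,
  mild_PBC al c u0 v0 U V /\
  (forall U' V', mild_PBC al c u0 v0 U' V' ->
     forall X t, 0 <= X <= 1 -> 0 <= t -> U' X t = U X t /\ V' X t = V X t) /\
  sol_bounds al c u0 v0 cl cu U V.
Proof.
  set (P := PBC_problem).
  exists (sol P true), (sol P false). split; [|split].
  - apply PBC_mild_iff. rewrite pair_sol. split; [apply (proj1 (sol_admissible P))|].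
    split; [intros; apply PBC_sol_periodic|]. intros i X t HX Ht. now apply sol_fixed.
  - intros U' V' Hmild X t HX Ht. apply PBC_mild_iff in Hmild as [Hc [Hper Heq]].
    assert (Huniq : forall i, pack U' V' i X t = sol P i X t).
    { intro i. apply (fixed_point_unique P (pack U' V') Hc Heq); [|exact I | exact Ht].
      intros Y s _ Hs. exists (frac Y). pose proof (frac_bound Y). split; [lra|].
      symmetry. apply (periodic_frac (fun Y => gap (pack U' V') (sol P) Y s)).
      intro Y'. unfold gap. rewrite !Hper, !PBC_sol_periodic by auto. reflexivity. }
    exact (conj (Huniq true) (Huniq false)).
  - apply sol_bounds_of. intros X t HX Ht.
    split; [apply (sol_bound P true) | apply (sol_bound P false)]; auto; exact I.
Qed.

End PBC.

End Well_posedness.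

Theorem proposition3p1 (alpha : R) (c u0 v0 : R -> R) (cl cu : R) :
  0 <= alpha ->
  cont01 u0 -> cont01 v0 -> cont01 c ->
  (forall x, 0 <= x <= 1 -> 0 <= u0 x /\ 0 <= v0 x) ->
  0 < cl ->
  (forall x, 0 <= x <= 1 -> cl <= c x <= cu) ->
  ((u0 0 = 0 /\ v0 1 = 0) ->
     exists U V : R -> R -> R,
       mild_DBC alpha c u0 v0 U V /\
       (forall U' V', mild_DBC alpha c u0 v0 U' V' ->
          forall X t, 0 <= X <= 1 -> 0 <= t -> U' X t = U X t /\ V' X t = V X t) /\
       sol_bounds alpha c u0 v0 cl cu U V)
  /\
  ((u0 0 = u0 1 /\ v0 0 = v0 1 /\ c 0 = c 1) ->
     exists U V : R -> R -> R,
       mild_PBC alpha c u0 v0 U V /\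
       (forall U' V', mild_PBC alpha c u0 v0 U' V' ->
          forall X t, 0 <= X <= 1 -> 0 <= t -> U' X t = U X t /\ V' X t = V X t) /\
       sol_bounds alpha c u0 v0 cl cu U V).
Proof.
  intros Halpha Hu0 Hv0 Hc Hdata Hcl Hc_bound.
  destruct (is_max01_exists u0 Hu0) as [Mu HMu].
  destruct (is_max01_exists v0 Hv0) as [Mv HMv].
  split.
  - intros [Hu0_0 Hv0_1]. apply DBC_well_posed with Mu Mv; auto.
  - intros [Hu0_glue [Hv0_glue Hc_glue]]. apply PBC_well_posed with Mu Mv; auto.
Qed.
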